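(* Let $T_5=\{(x,y)\in\mathbb{N}^2 : x+y\le 6\}$. Then $\mathrm{gon}(R(T_5))=10$.
   Context: $\mathbb{N}=\{1,2,3,\dots\}$. For a Ferrers diagram $F\subset\mathbb{N}^2$, the Ferrers rook graph $R(F)$ is the simple graph with vertex set $F$ in which distinct $(x,y),(x',y')$ are adjacent iff $x=x'$ or $y=y'$. Divisors on a graph: functions $D:V\to\mathbb{Z}$, degree $\sum_v D(v)$; firing a vertex $v$ means $v$ loses $\deg(v)$ chips and each neighbor gains one; divisors are equivalent if related by a sequence of firings; $\vert D\vert$ is the set of effective (nonnegative) divisors equivalent to $D$; $D$ has positive rank if for every vertex $v$ some $D'\in\vert D\vert$ has $D'(v)>0$. The gonality $\mathrm{gon}(G)$ is the minimum degree of a divisor on $G$ with positive rank. *)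

From mathcomp Require Import all_boot all_order all_algebra.
From Stdlib Require Import Relations.
Set Implicit Arguments. Unset Strict Implicit. Unset Printing Implicit Defensive.
Import GRing.Theory Num.Theory.
Local Open Scope ring_scope.

(* adj : rel V is assumed symmetric and irreflexive (true for rook graphs). *)

Definition div_deg (V : finType) (D : V -> int) : int := \sum_(v : V) D v.

Definition vdeg (V : finType) (adj : rel V) (v : V) : nat := #|[set w | adj v w]|.

Definition fire (V : finType) (adj : rel V) (D : V -> int) (v : V) : V -> int :=
  fun w => if w == v then D w - (vdeg adj v)%:Z
           else if adj v w then D w + 1 else D w.

Definition fires (V : finType) (adj : rel V) (D D' : V -> int) : Prop :=
  exists v, D' =1 fire adj D v.

Definition div_equiv (V : finType) (adj : rel V) : relation (V -> int) :=
  clos_refl_sym_trans _ (@fires V adj).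

Definition effective (V : finType) (D : V -> int) : Prop := forall v, 0 <= D v.

Definition positive_rank (V : finType) (adj : rel V) (D : V -> int) : Prop :=
  forall v, exists D', div_equiv adj D D' /\ effective D' /\ 0 < D' v.

Definition is_gonality (V : finType) (adj : rel V) (g : int) : Prop :=
  (exists D : V -> int, positive_rank adj D /\ div_deg D = g) /\
  (forall D : V -> int, positive_rank adj D -> g <= div_deg D).

Definition rook_adj (V : finType) (pos : V -> nat * nat) : rel V :=
  fun p q => (p != q) && (((pos p).1 == (pos q).1) || ((pos p).2 == (pos q).2)).

(* T_5 = {(x,y) in N^2 : x + y <= 6}, N = {1,2,...}; coordinates are < 7 *)
Definition T5 : Type :=
  {p : 'I_7 * 'I_7 | [&& (0 < p.1)%N, (0 < p.2)%N & (p.1 + p.2 <= 6)%N]}.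

Definition T5_pos (c : T5) : nat * nat := (nat_of_ord (val c).1, nat_of_ord (val c).2).

(* Upper bound: the divisor with one chip on each cell (x, y) with y >= 2 has degree 10, and
   for every cell an explicit firing script moves a chip onto it while staying effective.

   Lower bound: it suffices to rule out effective divisors of degree 9.  If E(v) <= 0 and E is
   equivalent to an effective divisor with a chip on v, the set of vertices fired most often by
   the connecting script is a nonempty set avoiding v that can fire legally from E.  Dhar's
   burning algorithm started at v excludes such sets whenever E <= M for a divisor M with
   M(v) = 0 through which the fire spreads everywhere.  Hence no divisor below a box M + L h
   has positive rank, and a computation checks that finitely many such boxes dominate every
   effective divisor of degree 9 on the 15 cells of T_5. *)

From Stdlib Require Import Relation_Operators FunctionalExtensionality.
From mathcomp Require Import all_boot all_order all_algebra.
From mathcomp Require Import zify.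
Set Implicit Arguments. Unset Strict Implicit. Unset Printing Implicit Defensive.
Import Order.TTheory GRing.Theory Num.Theory.

Section Divisors.
Variables (V : finType) (adj : rel V).
Hypotheses (adj_sym : symmetric adj) (adj_irr : irreflexive adj).
Local Open Scope ring_scope.

Lemma sum_Posz (I : Type) (r : seq I) (f : I -> nat) :
  \sum_(i <- r) (f i)%:Z = (sumn [seq f i | i <- r])%:Z.
Proof. by elim: r => [|i r IHr]; rewrite ?big_nil ?big_cons ?IHr. Qed.

Lemma card_set_sum1z (P : pred V) : #|[set w | P w]|%:Z = \sum_(w | P w) 1.
Proof. by rewrite -sum1dep_card -natz natr_sum. Qed.

Definition laplacian (g : V -> int) (u : V) : int := \sum_(w | adj u w) (g u - g w).

Lemma laplacianD g h u :
  laplacian (fun x => g x + h x) u = laplacian g u + laplacian h u.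
Proof. by rewrite -big_split; apply: eq_bigr => w _; rewrite opprD addrACA. Qed.

Lemma laplacianN g u : laplacian (fun x => - g x) u = - laplacian g u.
Proof. by rewrite -sumrN; apply: eq_bigr => w _; rewrite opprD. Qed.

Lemma laplacian0 u : laplacian (fun=> 0) u = 0.
Proof. by rewrite /laplacian big1 // => w _; rewrite subrr. Qed.

Lemma sum_laplacian g : \sum_u laplacian g u = 0.
Proof.
rewrite /laplacian (eq_bigr _ (fun u _ => sumrB _ _ _ _)) sumrB; apply/eqP; rewrite subr_eq0.
rewrite (exchange_big_dep xpredT) //=; apply/eqP/eq_bigr => w _.
by apply: eq_bigl => u; rewrite adj_sym.
Qed.

Lemma fire_laplacian D v :
  fire adj D v =1 (fun w => D w - laplacian (fun x => (x == v)%:Z) w).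
Proof.
move=> w; rewrite /fire /laplacian; case: eqP => [->|/eqP nwv].
  rewrite /vdeg card_set_sum1z; congr (_ - _).
  by apply: eq_bigr => x vx; rewrite (negPf (contraTneq _ vx)) // => ->; rewrite adj_irr.
rewrite adj_sym; case: ifP => wv.
  rewrite (bigD1 v) //= eqxx big1 => [|x /andP[_ /negPf ->] //].
  by rewrite addr0 opprB addrC.
by rewrite big1 ?subr0 // => x wx; case: eqP wx => // ->; rewrite wv.
Qed.

Lemma div_equiv_laplacian D D' :
  div_equiv adj D D' -> exists g, D' =1 (fun w => D w - laplacian g w).
Proof.
elim=> {D D'} [D D' [v eqD']|D|D D' _ [g eqD']|D1 D2 D3 _ [g eqD2] _ [h eqD3]].
- by exists (fun x => (x == v)%:Z) => w; rewrite eqD' fire_laplacian.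
- by exists (fun=> 0) => w; rewrite laplacian0 subr0.
- by exists (fun x => - g x) => w; rewrite laplacianN eqD' opprK subrK.
- by exists (fun x => g x + h x) => w; rewrite eqD3 eqD2 laplacianD opprD addrA.
Qed.

Lemma div_equiv_fire_seq (s : seq V) D :
  div_equiv adj D (fun w => D w - laplacian (fun x => (count_mem x s)%:Z) w).
Proof.
elim: s D => [|v s IHs] D /=.
  have -> : (fun w => D w - laplacian (fun=> 0) w) = D.
    by apply: functional_extensionality => w; rewrite laplacian0 subr0.
  exact: rst_refl.
apply: (rst_trans _ _ _ (fire adj D v)); first by apply: rst_step; exists v.
have -> : (fun w => D w - laplacian (fun x => ((v == x) + count_mem x s)%N%:Z) w) =
          (fun w => fire adj D v w - laplacian (fun x => (count_mem x s)%:Z) w).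
  apply: functional_extensionality => w; rewrite fire_laplacian -addrA -opprD -laplacianD.
  by congr (_ - laplacian _ _); apply: functional_extensionality => x; rewrite PoszD eq_sym.
exact: IHs.
Qed.

Lemma div_equiv_sub_laplacian (g : V -> nat) D :
  div_equiv adj D (fun w => D w - laplacian (fun x => (g x)%:Z) w).
Proof.
pose s := flatten [seq nseq (g y) y | y <- enum V].
have countE x : count_mem x s = g x.
  rewrite count_flatten sumnE !big_map (bigD1 x) //= count_nseq /= eqxx mul1n.
  by rewrite big1 ?addn0 // => y /negPf; rewrite count_nseq /= eq_sym => ->.
have -> : (fun x => (g x)%:Z) = (fun x => (count_mem x s)%:Z).
  by apply: functional_extensionality => x; rewrite countE.
exact: div_equiv_fire_seq.
Qed.

Lemma div_equiv_addr D D' (F : V -> int) :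
  div_equiv adj D D' -> div_equiv adj (fun w => D w + F w) (fun w => D' w + F w).
Proof.
elim=> {D D'} [D D' [v eqD']|D|D D' _|D1 D2 D3 _ + _]; last exact: rst_trans.
- apply: rst_step; exists v => w; rewrite eqD' /fire.
  by case: eqP => _; [|case: ifP => _]; rewrite // addrAC.
- exact: rst_refl.
- exact: rst_sym.
Qed.

Lemma div_deg_equiv D D' : div_equiv adj D D' -> div_deg D' = div_deg D.
Proof.
case/div_equiv_laplacian=> g eqD'.
by rewrite /div_deg (eq_bigr _ (fun w _ => eqD' w)) sumrB sum_laplacian subr0.
Qed.

Lemma positive_rank_equiv D D' :
  div_equiv adj D D' -> positive_rank adj D -> positive_rank adj D'.
Proof.
move=> DD' rD v; have [E [DE effE]] := rD v.
by exists E; split=> //; apply: rst_trans DE; apply: rst_sym.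
Qed.

Lemma positive_rank_addr D (F : V -> int) :
  effective F -> positive_rank adj D -> positive_rank adj (fun w => D w + F w).
Proof.
move=> effF rD v; have [E [DE [effE Ev]]] := rD v.
exists (fun w => E w + F w); split; first exact: div_equiv_addr.
by split=> [w|]; [rewrite addr_ge0 | rewrite ltr_wpDr].
Qed.

Definition outdeg (T : pred V) (u : V) : nat := #|[set w | adj u w & ~~ T w]|.

Lemma exists_legal_set E E' v :
  div_equiv adj E E' -> effective E' -> 0 < E' v -> E v <= 0 ->
  exists T : pred V, [/\ ~~ T v, exists u, T u & forall u, T u -> (outdeg T u)%:Z <= E u].
Proof.
case/div_equiv_laplacian=> g eqE' effE' E'v Ev.
have [m _ gmax] := @arg_maxP _ _ _ v xpredT g isT.
pose T u := g u == g m.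
have lap_ge u : T u -> (outdeg T u)%:Z <= laplacian g u.
  move/eqP=> gu; rewrite /outdeg card_set_sum1z big_mkcondr /=.
  apply: ler_sum => w _; have := gmax w isT; rewrite /T gu.
  case: eqP => [->|/eqP ne] /= le; first by rewrite subrr.
  have : g w < g m by rewrite lt_neqAle ne le.
  lia.
exists T; split; [apply/negP => Tv | by exists m; rewrite /T | move=> u Tu].
  have : 0 <= laplacian g v by apply: sumr_ge0 => w _; rewrite (eqP Tv) subr_ge0; apply: gmax.
  by move: E'v; rewrite eqE'; lia.
by apply: le_trans (lap_ge u Tu) _; rewrite -subr_ge0 -eqE'.
Qed.

Lemma gonality_ge (x0 : V) (k : nat) D :
  (forall D1, effective D1 -> div_deg D1 = k%:Z -> ~ positive_rank adj D1) ->
  positive_rank adj D -> k%:Z < div_deg D.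
Proof.
move=> noD1 rD; rewrite ltNge; apply/negP => degD.
have [D0 [DD0 [effD0 _]]] := rD x0.
pose F w : int := if w == x0 then k%:Z - div_deg D else 0.
have effF : effective F by move=> w; rewrite /F; case: eqP; rewrite ?subr_ge0.
apply: (noD1 (fun w => D0 w + F w)).
- by move=> w; apply: addr_ge0.
- rewrite /div_deg big_split /= -/(div_deg D0) (div_deg_equiv DD0) (bigD1 x0) //=.
  by rewrite /F eqxx big1 ?addr0 ?subrKC // => w /negPf ->.
- exact/positive_rank_addr/(positive_rank_equiv DD0).
Qed.

End Divisors.

Lemma nth_leq_sumn (d : seq nat) i : nth 0 d i <= sumn d.
Proof. by elim: d i => [|x d IHd] [|i] //=; rewrite ?leq_addr ?(leq_trans (IHd i)) ?leq_addl. Qed.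

Lemma map_index_uniq (T : eqType) (s : seq T) :
  uniq s -> [seq index x s | x <- s] = iota 0 (size s).
Proof.
elim: s => //= x s IHs /andP[xs us]; rewrite eqxx -[1]/(1 + 0) iotaDl -IHs // -map_comp.
by congr (_ :: _); apply/eq_in_map => y ys /=; case: eqP => // xy; rewrite xy ys in xs.
Qed.

Fixpoint suffix_mins (b : seq nat) : seq (nat * nat) :=
  if b is c :: b' then let r := suffix_mins b' in (c, minn c (head (c, c) r).2) :: r
  else [::].

(* [covers n k bs] checks that every [d] of length [n] and sum [k] lies below some box of [bs];
   the running suffix minima let a box discharge a whole subtree of the search. *)
Fixpoint covers (n k : nat) (boxes : seq (seq (nat * nat))) : bool :=
  has (fun b => k <= (head (0, 0) b).2) boxes ||
  if n is n'.+1 then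
    all (fun a => covers n' (k - a) [seq behead b | b <- boxes & a <= (head (0, 0) b).1])
      (iota 0 k.+1)
  else k != 0.

Lemma head_suffix_mins b i : i < size b -> (head (0, 0) (suffix_mins b)).2 <= nth 0 b i.
Proof.
elim: b i => [|c b IHb] [|i] //= lti; first exact: geq_minl.
apply: leq_trans (geq_minr _ _) _; case: b IHb lti => //= c' b' IHb lti.
exact: (IHb i).
Qed.

Lemma behead_suffix_mins a bs : all (fun b => 0 < size b) bs ->
  [seq behead b | b <- map suffix_mins bs & a <= (head (0, 0) b).1] =
  map suffix_mins [seq behead b | b <- bs & a <= head 0 b].
Proof.
move/allP=> bs_gt0; rewrite filter_map -!map_comp.
rewrite (@eq_in_filter _ _ (fun b => a <= head 0 b)) => [|b /bs_gt0]; last by case: b.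
by apply/eq_in_map => b; rewrite mem_filter => /andP[_ /bs_gt0]; case: b.
Qed.

Lemma coversP n k bs : all (fun b => size b == n) bs -> covers n k (map suffix_mins bs) ->
  forall d, size d = n -> sumn d = k ->
  exists2 b, b \in bs & forall i, nth 0 d i <= nth 0 b i.
Proof.
elim: n k bs => [|n IHn] k bs /allP sz_bs /orP[/hasP[_ /mapP[b bs_b ->] le_k]|cov] d sz_d sum_d.
- by exists b => // i; case: d sz_d {sum_d} => // _; rewrite nth_nil.
- by case: d sz_d sum_d cov => // _ <-.
- exists b => // i; have [lti|] := ltnP i (size b).
    by rewrite (leq_trans _ (head_suffix_mins lti)) // (leq_trans _ le_k) // -sum_d nth_leq_sumn.
  by rewrite (eqP (sz_bs b bs_b)) -sz_d => le_d; rewrite nth_default.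
- case: d sz_d sum_d => //= a d [sz_d] sum_d.
  move/allP: cov => /(_ a); rewrite mem_iota ltnS -sum_d leq_addr addKn => /(_ isT).
  rewrite behead_suffix_mins; last by apply/allP => b /sz_bs /eqP ->.
  set bs' := [seq behead b | b <- bs & _] => cov_a.
  have sz_bs' : all (fun b => size b == n) bs'.
    apply/allP => _ /mapP[b /[!mem_filter] /andP[_ /sz_bs /eqP sz_b] ->].
    by rewrite size_behead sz_b.
  have [_ /mapP[b /[!mem_filter] /andP[le_a bs_b] ->] le_d] := IHn _ _ sz_bs' cov_a d sz_d erefl.
  exists b => // -[|i] /=; first by case: b le_a {bs_b le_d}.
  by rewrite -nth_behead.
Qed.

Definition adj_lists (V : eqType) (adj : rel V) (e : seq V) : seq (seq nat) :=
  [seq [seq index y e | y <- e & adj x y] | x <- e].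

Definition script_loss (N : seq (seq nat)) (h : seq nat) (i : nat) : nat :=
  size (nth [::] N i) * nth 0 h i.

Definition script_gain (N : seq (seq nat)) (h : seq nat) (i : nat) : nat :=
  sumn [seq nth 0 h j | j <- nth [::] N i].

(* Dhar's burning algorithm: a vertex catches fire once more of its neighbours burn than it
   has chips. *)
Definition burn_step (N : seq (seq nat)) (M : seq nat) (b : seq bool) : seq bool :=
  [seq nth false b i || (nth 0 M i < count (nth false b) (nth [::] N i)) | i <- iota 0 (size N)].

Definition burnt (N : seq (seq nat)) (M : seq nat) (v : nat) : seq bool :=
  iter (size N) (burn_step N M) [seq i == v | i <- iota 0 (size N)].

Lemma size_burnt N M v : size (burnt N M v) = size N.
Proof.
by rewrite /burnt; case: {1}(size N) => [|n]; rewrite ?iterS /burn_step size_map size_iota.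
Qed.

(* A certificate [(v, h, M)] consists of a vertex [v], a firing script [h] and a divisor [M]
   with no chip on [v] under which the fire started at [v] burns everything.  The subtraction
   in [cert_box] is truncated; the last check of [lower_cert_ok] makes it exact. *)
Definition lower_cert_ok (N : seq (seq nat)) (c : nat * seq nat * seq nat) : bool :=
  let: (v, h, M) := c in
  [&& v < size N, nth 0 M v == 0, all id (burnt N M v)
    & all (fun i => script_gain N h i <= nth 0 M i + script_loss N h i) (iota 0 (size N))].

Definition cert_box (N : seq (seq nat)) (c : nat * seq nat * seq nat) : seq nat :=
  let: (v, h, M) := c in
  [seq nth 0 M i + script_loss N h i - script_gain N h i | i <- iota 0 (size N)].

Definition reaches (N : seq (seq nat)) (l h : seq nat) (i : nat) : bool :=
  all (fun j => script_loss N h j <= nth 0 l j + script_gain N h j) (iota 0 (size N))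
  && (script_loss N h i < nth 0 l i + script_gain N h i).

Section EnumeratedGraph.
Variables (V : finType) (adj : rel V) (x0 : V) (e : seq V) (N : seq (seq nat)).
Hypotheses (adj_sym : symmetric adj) (adj_irr : irreflexive adj).
Hypotheses (e_uniq : uniq e) (mem_e : forall x, x \in e) (adj_listsE : adj_lists adj e = N).

Local Notation idx x := (index x e).
Local Open Scope ring_scope.

(* Divisors and firing scripts are stored as lists indexed by position in [e]. *)
Definition seq_div (l : seq nat) (x : V) : int := (nth 0%N l (idx x))%:Z.

Lemma size_adj_lists : size N = size e.
Proof. by rewrite -adj_listsE size_map. Qed.

Lemma idx_lt x : (idx x < size N)%N.
Proof. by rewrite size_adj_lists index_mem. Qed.

Lemma idx_in_iota x : idx x \in iota 0 (size N).
Proof. by rewrite mem_iota idx_lt. Qed.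

Lemma nth_adj_lists x : nth [::] N (idx x) = [seq idx y | y <- e & adj x y].
Proof. by rewrite -adj_listsE (nth_map x) ?index_mem // nth_index. Qed.

Lemma big_enumeration (R : Type) (idx : R) (op : Monoid.com_law idx) (P : pred V) F :
  \big[op/idx]_(x | P x) F x = \big[op/idx]_(x <- e | P x) F x.
Proof.
rewrite -[RHS]big_filter big_uniq ?filter_uniq //; apply: eq_bigl => x.
by rewrite mem_filter mem_e andbT.
Qed.

Lemma card_enumeration (P : pred V) : #|[set x | P x]| = count P e.
Proof. by rewrite -sum1dep_card big_enumeration sum1_count. Qed.

Lemma laplacian_seq_div h x :
  laplacian adj (seq_div h) x = (script_loss N h (idx x))%:Z - (script_gain N h (idx x))%:Z.
Proof.
rewrite /laplacian big_enumeration -big_filter /script_loss /script_gain nth_adj_lists.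
rewrite size_map -map_comp; elim: [seq y <- e | _] => [|y s IHs].
  by rewrite big_nil.
by rewrite big_cons IHs /= /seq_div; lia.
Qed.

Lemma div_deg_seq_div l : size l = size e -> div_deg (seq_div l) = (sumn l)%:Z.
Proof.
move=> sz_l; rewrite /div_deg big_enumeration sum_Posz.
by rewrite -[in RHS](mkseq_nth 0%N l) /mkseq sz_l -(map_index_uniq e_uniq) -map_comp.
Qed.

Lemma burnt_notin_legal (M : seq nat) (v : V) (T : pred V) :
  (forall u, T u -> (outdeg adj T u <= nth 0 M (idx u))%N) -> ~~ T v ->
  forall x, nth false (burnt N M (idx v)) (idx x) -> ~~ T x.
Proof.
move=> legalT Tv; pose safe b := forall x, nth false b (idx x) -> ~~ T x.
have safe_step b : safe b -> safe (burn_step N M b).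
  move=> safe_b x; rewrite (nth_map 0%N) ?size_iota ?idx_lt // nth_iota ?idx_lt //=.
  case/orP=> [/safe_b //|lt_M]; apply/negP => Tx.
  suff : (count (nth false b) (nth [::] N (idx x)) <= outdeg adj T x)%N.
    by move/(leq_trans lt_M)/leq_trans/(_ (legalT x Tx)); rewrite ltnn.
  rewrite nth_adj_lists count_map /outdeg card_enumeration count_filter.
  by apply: sub_count => y /andP[/safe_b -> ->].
have safe_iter n b : safe b -> safe (iter n (burn_step N M) b).
  by elim: n => //= n IHn /IHn; apply: safe_step.
apply: safe_iter => x; rewrite (nth_map 0%N) ?size_iota ?idx_lt // nth_iota ?idx_lt //=.
by rewrite add0n => /eqP/(congr1 (nth x0 e)); rewrite !nth_index // => ->.
Qed.

Lemma cert_box_no_positive_rank c D : lower_cert_ok N c ->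
  (forall x, D x <= (nth 0%N (cert_box N c) (idx x))%:Z) -> ~ positive_rank adj D.
Proof.
case: c => [[v h] M] /and4P[lt_v /eqP Mv0 burns /allP no_underflow] le_D rD.
pose E x := D x - laplacian adj (seq_div h) x.
have DE : div_equiv adj D E := div_equiv_sub_laplacian adj_sym adj_irr _ D.
have le_E x : E x <= (nth 0%N M (idx x))%:Z.
  have := le_D x; have := no_underflow _ (idx_in_iota x).
  rewrite /E laplacian_seq_div (nth_map 0%N) ?size_iota ?idx_lt // nth_iota ?idx_lt //=.
  rewrite add0n; lia.
pose w := nth x0 e v; have idx_w : idx w = v by rewrite index_uniq // -size_adj_lists.
have [E' [DE' [effE' E'w]]] := rD w.
have Ew : E w <= 0 by have := le_E w; rewrite idx_w Mv0.
have EE' : div_equiv adj E E' by apply: rst_trans DE'; apply: rst_sym.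
have [T [Tw [u Tu] legalT]] := exists_legal_set adj_sym adj_irr EE' effE' E'w Ew.
have legalM y : T y -> (outdeg adj T y <= nth 0 M (idx y))%N.
  by move=> Ty; rewrite -lez_nat (le_trans (legalT y Ty) (le_E y)).
have burnt_u : nth false (burnt N M (idx w)) (idx u).
  by rewrite idx_w; apply/(all_nthP false burns); rewrite size_burnt idx_lt.
by move: (burnt_notin_legal legalM Tw burnt_u); rewrite Tu.
Qed.

Lemma reaches_positive_rank l hs :
  all (fun i => reaches N l (nth [::] hs i) i) (iota 0 (size N)) -> positive_rank adj (seq_div l).
Proof.
move=> /allP reach x; have /andP[/allP eff gt0] := reach _ (idx_in_iota x).
exists (fun y => seq_div l y - laplacian adj (seq_div (nth [::] hs (idx x))) y); split.
  exact: div_equiv_sub_laplacian.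
split=> [y|]; rewrite laplacian_seq_div /seq_div; last lia.
by have := eff _ (idx_in_iota y); lia.
Qed.

Lemma covers_no_positive_rank (k : nat) cs :
  all (lower_cert_ok N) cs -> covers (size N) k (map suffix_mins (map (cert_box N) cs)) ->
  forall D, effective D -> div_deg D = k%:Z -> ~ positive_rank adj D.
Proof.
move=> /allP ok cov D effD degD.
pose d := [seq absz (D x) | x <- e].
have Dd x : D x = (nth 0%N d (idx x))%:Z.
  by rewrite (nth_map x) ?index_mem // nth_index // gez0_abs.
have sz_d : size d = size N by rewrite size_map size_adj_lists.
have sum_d : sumn d = k.
  apply/eqP; rewrite -eqz_nat -div_deg_seq_div -?degD; last by rewrite size_map.
  by apply/eqP/eq_bigr => x _; rewrite Dd.
have sz_boxes : all (fun b => size b == size N) (map (cert_box N) cs).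
  by apply/allP => _ /mapP[[[v h] M] _ ->]; rewrite size_map size_iota.
have [_ /mapP[c cs_c ->] le_d] := coversP sz_boxes cov sz_d sum_d.
by apply: (cert_box_no_positive_rank (ok c cs_c)) => x; rewrite Dd lez_nat.
Qed.

End EnumeratedGraph.

Section RookGraph.
Variables (V : finType) (pos : V -> nat * nat).

Lemma rook_adj_sym : symmetric (rook_adj pos).
Proof. by move=> p q; rewrite /rook_adj eq_sym [(pos p).1 == _]eq_sym [(pos p).2 == _]eq_sym. Qed.

Lemma rook_adj_irr : irreflexive (rook_adj pos).
Proof. by move=> p; rewrite /rook_adj eqxx. Qed.

End RookGraph.

Notation cell a b := (exist _ (@Ordinal 7 a isT, @Ordinal 7 b isT) isT : T5).

(* The certificates below refer to cells by their position in this list. *)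
Definition T5_cells : seq T5 := [::
  cell 1 1; cell 1 2; cell 1 3; cell 1 4; cell 1 5; cell 2 1; cell 2 2; cell 2 3;
  cell 2 4; cell 3 1; cell 3 2; cell 3 3; cell 4 1; cell 4 2; cell 5 1].

Lemma T5_pos_inj : injective T5_pos.
Proof.
move=> [[a b] ab] [[c d] cd] /= [] /ord_inj eq_ac /ord_inj eq_bd.
by apply: val_inj; rewrite /= eq_ac eq_bd.
Qed.

Lemma T5_cells_pos :
  map T5_pos T5_cells = [seq (a, b) | a <- iota 1 5, b <- iota 1 (6 - a)].
Proof. by []. Qed.

Lemma mem_T5_cells x : x \in T5_cells.
Proof.
rewrite -(mem_map T5_pos_inj) T5_cells_pos; case: x => [[a b] T5_ab].
have /and3P[a_gt0 b_gt0 ab_le6] : [&& 0 < a, 0 < b & a + b <= 6] := T5_ab.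
by apply/allpairsPdep; exists (a : nat), (b : nat); rewrite !mem_iota; split=> //; lia.
Qed.

Lemma uniq_T5_cells : uniq T5_cells.
Proof. by rewrite -(map_inj_uniq T5_pos_inj) T5_cells_pos. Qed.

Definition T5_nbrs : seq (seq nat) := [::
  [:: 1; 2; 3; 4; 5; 9; 12; 14]; [:: 0; 2; 3; 4; 6; 10; 13]; [:: 0; 1; 3; 4; 7; 11];
  [:: 0; 1; 2; 4; 8]; [:: 0; 1; 2; 3]; [:: 0; 6; 7; 8; 9; 12; 14]; [:: 1; 5; 7; 8; 10; 13];
  [:: 2; 5; 6; 8; 11]; [:: 3; 5; 6; 7]; [:: 0; 5; 10; 11; 12; 14]; [:: 1; 6; 9; 11; 13];
  [:: 2; 7; 9; 10]; [:: 0; 5; 9; 13; 14]; [:: 1; 6; 10; 12]; [:: 0; 5; 9; 12]].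

Lemma T5_adj_lists : adj_lists (rook_adj T5_pos) T5_cells = T5_nbrs.
Proof. by vm_compute. Qed.

Definition T5_divisor : seq nat := [:: 0; 1; 1; 1; 1; 0; 1; 1; 1; 0; 1; 1; 0; 1; 0].

Definition T5_scripts : seq (seq nat) := [::
  T5_divisor; [::]; [::]; [::]; [::]; T5_divisor; [::]; [::]; [::]; T5_divisor; [::]; [::];
  T5_divisor; [::]; [:: 1; 2; 2; 2; 2; 1; 2; 2; 2; 1; 2; 2; 1; 2; 0]].

Lemma T5_scripts_reach :
  all (fun i => reaches T5_nbrs T5_divisor (nth [::] T5_scripts i) i) (iota 0 15).
Proof. by vm_compute. Qed.

Definition T5_lower_certs : seq (nat * seq nat * seq nat) := [::
(5, [:: 0; 0; 0; 0; 0; 0; 0; 0; 0; 0; 0; 0; 0; 0; 0], [:: 1; 2; 2; 3; 2; 0; 1; 3; 3; 0; 1; 0; 2; 3; 3]);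
(6, [:: 0; 0; 0; 0; 0; 0; 0; 0; 0; 0; 0; 0; 0; 0; 0], [:: 3; 3; 3; 1; 3; 1; 0; 2; 0; 0; 1; 3; 2; 3; 1]);
(1, [:: 0; 0; 0; 0; 0; 0; 0; 0; 0; 0; 0; 0; 0; 0; 0], [:: 3; 0; 1; 0; 2; 2; 1; 3; 2; 0; 3; 3; 1; 2; 3]);
(7, [:: 0; 0; 0; 0; 0; 0; 0; 0; 0; 0; 0; 0; 0; 0; 0], [:: 3; 2; 1; 3; 1; 0; 3; 0; 3; 1; 4; 2; 2; 1; 0]);
(7, [:: 0; 0; 0; 0; 0; 0; 0; 0; 0; 0; 0; 0; 0; 0; 0], [:: 1; 1; 0; 2; 3; 0; 3; 0; 2; 3; 3; 1; 1; 3; 3]);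
(1, [:: 0; 0; 0; 0; 0; 0; 0; 0; 0; 0; 0; 0; 0; 0; 1], [:: 2; 0; 0; 1; 3; 2; 1; 0; 3; 4; 1; 2; 4; 2; 1]);
(1, [:: 0; 0; 0; 0; 0; 0; 0; 0; 0; 0; 0; 0; 0; 0; 0], [:: 0; 0; 2; 1; 3; 2; 2; 3; 2; 1; 0; 3; 3; 1; 3]);
(6, [:: 0; 0; 0; 0; 0; 0; 0; 0; 0; 0; 0; 0; 0; 0; 0], [:: 4; 0; 0; 2; 1; 2; 0; 3; 3; 1; 1; 1; 4; 2; 2]);
(2, [:: 0; 0; 0; 0; 0; 0; 0; 0; 0; 0; 0; 0; 0; 0; 0], [:: 1; 2; 0; 4; 0; 3; 3; 3; 2; 0; 2; 2; 1; 1; 2]);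
(12, [:: 0; 0; 0; 0; 0; 0; 0; 0; 0; 0; 0; 0; 0; 0; 0], [:: 2; 1; 3; 0; 2; 0; 2; 3; 3; 1; 3; 2; 0; 1; 3]);
(11, [:: 0; 0; 0; 0; 0; 0; 0; 0; 0; 0; 0; 0; 0; 0; 1], [:: 2; 1; 0; 3; 1; 6; 2; 2; 2; 3; 0; 0; 3; 1; 0]);
(12, [:: 0; 0; 0; 0; 0; 0; 0; 0; 0; 0; 0; 0; 0; 0; 0], [:: 2; 1; 4; 2; 2; 0; 0; 2; 1; 4; 2; 3; 0; 1; 2]);
(3, [:: 0; 0; 0; 0; 0; 0; 0; 0; 0; 0; 0; 0; 0; 0; 0], [:: 0; 3; 1; 0; 2; 1; 2; 3; 0; 3; 1; 3; 3; 3; 1]);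
(5, [:: 0; 0; 0; 0; 0; 0; 0; 0; 0; 0; 0; 0; 0; 0; 0], [:: 0; 3; 1; 2; 0; 0; 2; 1; 3; 3; 4; 1; 4; 1; 1]);
(9, [:: 0; 0; 0; 0; 0; 0; 0; 0; 0; 0; 0; 0; 0; 0; 0], [:: 2; 2; 5; 2; 2; 1; 2; 1; 1; 0; 2; 0; 0; 3; 3]);
(7, [:: 0; 0; 0; 0; 0; 0; 0; 0; 0; 0; 0; 0; 0; 0; 0], [:: 4; 0; 2; 1; 2; 2; 1; 0; 0; 5; 3; 1; 2; 1; 2]);
(14, [:: 0; 0; 0; 0; 0; 0; 0; 0; 0; 0; 0; 0; 0; 0; 0], [:: 3; 1; 2; 3; 0; 1; 3; 1; 2; 0; 2; 3; 2; 3; 0]);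
(1, [:: 0; 0; 0; 0; 0; 0; 0; 0; 0; 0; 0; 0; 0; 0; 0], [:: 1; 0; 3; 2; 1; 4; 2; 1; 3; 2; 0; 3; 0; 1; 3]);
(3, [:: 0; 0; 0; 0; 0; 0; 0; 0; 0; 0; 0; 0; 0; 0; 0], [:: 2; 3; 1; 0; 0; 3; 2; 4; 2; 1; 1; 2; 2; 3; 0]);
(4, [:: 0; 0; 0; 0; 0; 0; 0; 0; 0; 0; 0; 0; 0; 1; 0], [:: 1; 3; 2; 0; 0; 1; 3; 1; 3; 0; 4; 2; 4; 0; 2]);
(0, [:: 0; 0; 0; 0; 0; 0; 0; 0; 0; 0; 0; 0; 0; 0; 0], [:: 0; 1; 2; 4; 2; 1; 4; 1; 1; 2; 4; 0; 3; 1; 0]);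
(9, [:: 0; 0; 0; 0; 0; 0; 0; 0; 0; 0; 0; 0; 0; 0; 0], [:: 3; 2; 4; 2; 3; 2; 0; 1; 2; 0; 0; 2; 1; 1; 3]);
(12, [:: 0; 0; 0; 0; 0; 0; 0; 0; 0; 0; 0; 0; 0; 0; 0], [:: 1; 3; 1; 2; 3; 2; 0; 4; 2; 3; 2; 0; 0; 3; 0]);
(6, [:: 0; 0; 0; 0; 0; 0; 0; 0; 0; 0; 0; 1; 0; 0; 0], [:: 3; 3; 3; 3; 3; 0; 0; 3; 1; 2; 3; 0; 0; 1; 1]);
(3, [:: 0; 0; 0; 0; 0; 0; 0; 0; 0; 0; 0; 0; 0; 0; 0], [:: 2; 3; 0; 0; 1; 1; 3; 2; 3; 2; 2; 3; 1; 0; 3]);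
(1, [:: 0; 0; 0; 0; 0; 0; 0; 0; 1; 0; 0; 0; 0; 0; 0], [:: 0; 0; 2; 4; 1; 2; 4; 4; 0; 3; 3; 1; 1; 1; 0]);
(10, [:: 0; 0; 0; 0; 0; 0; 0; 0; 0; 0; 0; 0; 0; 0; 0], [:: 3; 2; 1; 4; 2; 2; 0; 1; 0; 1; 0; 2; 4; 2; 2]);
(0, [:: 0; 0; 0; 0; 0; 0; 0; 0; 0; 0; 0; 0; 0; 0; 0], [:: 0; 2; 1; 0; 3; 2; 4; 1; 0; 1; 4; 2; 3; 1; 2]);
(12, [:: 0; 0; 0; 0; 1; 0; 0; 0; 0; 0; 0; 0; 0; 0; 0], [:: 3; 6; 4; 1; 0; 1; 2; 2; 1; 2; 0; 2; 0; 2; 0]);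
(9, [:: 0; 0; 0; 0; 0; 0; 0; 0; 0; 0; 0; 0; 0; 0; 0], [:: 0; 1; 1; 2; 3; 4; 5; 1; 2; 0; 2; 2; 2; 0; 1]);
(8, [:: 0; 0; 0; 0; 1; 0; 0; 0; 0; 0; 0; 0; 0; 0; 0], [:: 3; 5; 2; 4; 0; 1; 2; 0; 0; 2; 2; 3; 1; 1; 0]);
(13, [:: 0; 0; 0; 0; 0; 0; 0; 0; 0; 0; 0; 0; 0; 0; 0], [:: 4; 1; 4; 1; 0; 2; 0; 2; 1; 5; 2; 0; 3; 0; 1]);
(8, [:: 0; 0; 0; 0; 0; 0; 0; 0; 0; 0; 0; 0; 0; 0; 0], [:: 2; 1; 3; 1; 2; 0; 1; 4; 0; 4; 0; 1; 1; 3; 3]);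
(13, [:: 0; 0; 0; 0; 0; 0; 0; 0; 0; 0; 0; 0; 0; 0; 0], [:: 1; 2; 5; 0; 2; 3; 0; 2; 3; 1; 1; 1; 4; 0; 1]);
(0, [:: 0; 0; 0; 0; 0; 0; 0; 0; 0; 0; 0; 0; 0; 1; 0], [:: 0; 6; 0; 1; 2; 2; 2; 1; 0; 1; 3; 2; 4; 0; 2]);
(12, [:: 0; 0; 0; 0; 0; 0; 0; 0; 0; 0; 0; 0; 0; 0; 0], [:: 1; 2; 0; 1; 3; 6; 3; 1; 1; 2; 2; 1; 0; 3; 0]);
(11, [:: 0; 0; 0; 0; 0; 0; 0; 0; 0; 0; 0; 0; 0; 0; 1], [:: 1; 3; 1; 3; 3; 3; 0; 0; 1; 5; 1; 0; 2; 1; 2]);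
(11, [:: 0; 0; 0; 0; 0; 0; 0; 0; 0; 0; 0; 0; 0; 0; 0], [:: 0; 3; 3; 3; 0; 1; 4; 1; 2; 1; 0; 0; 2; 3; 3]);
(4, [:: 0; 0; 0; 0; 0; 0; 0; 0; 0; 0; 0; 0; 0; 0; 0], [:: 0; 2; 3; 1; 0; 1; 1; 3; 3; 2; 2; 2; 4; 2; 0]);
(10, [:: 0; 0; 0; 0; 0; 0; 0; 0; 0; 0; 0; 0; 0; 0; 0], [:: 3; 4; 2; 3; 3; 0; 3; 2; 0; 2; 0; 2; 0; 0; 2]);
(3, [:: 0; 0; 0; 0; 0; 0; 0; 0; 0; 0; 1; 0; 0; 0; 0], [:: 1; 5; 3; 0; 0; 2; 2; 4; 2; 3; 0; 2; 0; 1; 1]);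
(14, [:: 0; 0; 0; 0; 0; 0; 0; 0; 0; 0; 0; 0; 0; 0; 0], [:: 1; 1; 2; 3; 3; 2; 1; 2; 0; 3; 3; 3; 0; 2; 0]);
(2, [:: 0; 0; 0; 0; 0; 0; 0; 0; 0; 0; 0; 0; 0; 0; 0], [:: 1; 4; 0; 3; 1; 4; 0; 1; 3; 1; 1; 0; 1; 3; 3]);
(14, [:: 0; 0; 0; 0; 0; 0; 0; 0; 1; 0; 0; 0; 0; 0; 0], [:: 2; 1; 5; 2; 2; 3; 5; 2; 0; 0; 1; 0; 1; 2; 0]);
(7, [:: 0; 0; 0; 0; 0; 0; 0; 0; 0; 0; 0; 0; 0; 0; 0], [:: 2; 0; 1; 3; 1; 2; 4; 0; 2; 1; 2; 0; 4; 2; 2]);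
(6, [:: 0; 0; 0; 0; 0; 0; 0; 0; 0; 0; 0; 0; 0; 0; 0], [:: 2; 1; 4; 0; 3; 6; 0; 0; 1; 1; 1; 1; 2; 3; 1]);
(10, [:: 0; 0; 0; 0; 0; 0; 0; 0; 0; 0; 0; 0; 0; 0; 0], [:: 2; 1; 1; 2; 3; 4; 2; 3; 1; 5; 0; 0; 0; 0; 2]);
(10, [:: 0; 0; 0; 0; 1; 0; 0; 0; 0; 0; 0; 0; 0; 0; 0], [:: 1; 2; 3; 3; 1; 0; 1; 4; 1; 3; 0; 2; 4; 0; 1]);
(4, [:: 0; 0; 0; 0; 0; 0; 0; 0; 0; 0; 0; 0; 0; 0; 0], [:: 5; 0; 1; 2; 0; 4; 5; 1; 2; 1; 1; 1; 1; 0; 2]);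
(2, [:: 0; 0; 0; 0; 0; 0; 0; 0; 0; 0; 0; 0; 0; 0; 0], [:: 7; 1; 0; 2; 2; 2; 1; 1; 0; 2; 2; 0; 3; 2; 1]);
(7, [:: 0; 0; 0; 0; 0; 0; 0; 0; 0; 0; 0; 0; 1; 0; 0], [:: 2; 1; 0; 0; 3; 3; 1; 0; 3; 3; 1; 3; 1; 2; 3]);
(1, [:: 0; 0; 0; 0; 0; 0; 0; 0; 0; 0; 0; 0; 0; 0; 0], [:: 3; 0; 4; 2; 1; 0; 2; 1; 3; 5; 1; 2; 1; 0; 1]);
(6, [:: 0; 0; 0; 0; 1; 0; 0; 0; 0; 0; 0; 0; 0; 0; 0], [:: 5; 2; 1; 2; 0; 1; 0; 4; 1; 4; 0; 1; 1; 1; 3]);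
(5, [:: 0; 0; 0; 0; 1; 0; 0; 0; 0; 0; 0; 0; 0; 0; 0], [:: 2; 5; 4; 2; 0; 0; 2; 0; 2; 1; 1; 0; 3; 3; 1]);
(12, [:: 0; 0; 1; 0; 0; 0; 0; 0; 0; 0; 0; 0; 0; 0; 0], [:: 6; 3; 0; 1; 3; 1; 2; 1; 3; 3; 0; 3; 0; 0; 0]);
(4, [:: 0; 0; 0; 0; 0; 0; 0; 0; 0; 0; 0; 0; 0; 0; 0], [:: 1; 4; 3; 0; 0; 3; 0; 1; 0; 4; 3; 1; 2; 3; 1]);
(9, [:: 0; 0; 0; 0; 0; 0; 0; 0; 0; 0; 0; 0; 0; 0; 0], [:: 4; 0; 2; 4; 1; 2; 0; 3; 2; 0; 4; 1; 0; 2; 1]);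
(4, [:: 0; 0; 0; 0; 0; 0; 0; 0; 0; 0; 0; 0; 0; 0; 0], [:: 4; 1; 2; 0; 0; 2; 3; 1; 1; 3; 1; 0; 2; 3; 3]);
(6, [:: 0; 0; 0; 0; 0; 0; 0; 0; 0; 0; 0; 0; 0; 0; 0], [:: 1; 0; 2; 4; 0; 3; 0; 1; 2; 2; 4; 2; 1; 1; 3]);
(4, [:: 0; 0; 0; 0; 0; 0; 0; 0; 0; 0; 0; 0; 0; 0; 0], [:: 1; 0; 3; 2; 0; 3; 5; 3; 1; 1; 1; 2; 0; 2; 2]);
(1, [:: 0; 0; 0; 0; 0; 0; 0; 0; 0; 0; 0; 0; 0; 0; 0], [:: 1; 0; 0; 3; 3; 5; 1; 4; 0; 1; 2; 2; 2; 0; 2]);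
(12, [:: 0; 0; 0; 0; 0; 0; 0; 0; 0; 0; 0; 0; 0; 0; 0], [:: 0; 2; 0; 3; 1; 1; 4; 1; 2; 3; 1; 3; 0; 3; 2]);
(14, [:: 0; 0; 0; 0; 0; 0; 0; 1; 0; 0; 0; 1; 0; 0; 0], [:: 0; 0; 3; 1; 2; 5; 3; 0; 1; 5; 2; 2; 1; 1; 0]);
(9, [:: 0; 0; 0; 0; 0; 0; 0; 0; 1; 0; 0; 0; 0; 0; 0], [:: 0; 1; 1; 3; 3; 6; 2; 3; 0; 0; 3; 0; 2; 1; 1]);
(3, [:: 0; 0; 0; 0; 0; 0; 0; 0; 0; 0; 0; 0; 0; 0; 0], [:: 6; 2; 0; 0; 1; 3; 1; 2; 1; 1; 0; 2; 3; 3; 1]);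
(0, [:: 0; 0; 0; 0; 0; 0; 0; 0; 0; 0; 0; 0; 0; 0; 0], [:: 0; 2; 4; 0; 1; 3; 1; 4; 1; 2; 3; 1; 1; 0; 3]);
(11, [:: 0; 0; 0; 0; 0; 0; 0; 0; 0; 0; 0; 0; 0; 0; 0], [:: 4; 5; 1; 2; 3; 1; 1; 2; 2; 0; 3; 0; 2; 0; 0]);
(9, [:: 0; 0; 0; 0; 0; 0; 0; 1; 0; 0; 0; 0; 0; 0; 0], [:: 2; 1; 3; 2; 0; 6; 3; 0; 2; 0; 2; 3; 0; 1; 1]);
(5, [:: 0; 0; 0; 0; 0; 0; 0; 0; 0; 0; 0; 0; 0; 0; 0], [:: 2; 1; 2; 1; 3; 0; 3; 1; 3; 0; 0; 3; 4; 2; 1]);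
(10, [:: 0; 0; 0; 1; 0; 0; 0; 0; 0; 0; 0; 0; 0; 0; 0], [:: 3; 1; 3; 1; 3; 0; 0; 1; 3; 5; 0; 2; 2; 2; 0]);
(0, [:: 0; 0; 0; 0; 0; 0; 0; 0; 1; 0; 0; 0; 0; 0; 0], [:: 0; 3; 1; 2; 0; 5; 2; 1; 2; 5; 0; 2; 1; 1; 1]);
(12, [:: 0; 0; 0; 0; 0; 0; 0; 0; 0; 0; 0; 0; 0; 0; 0], [:: 1; 6; 2; 1; 0; 2; 2; 1; 2; 0; 1; 3; 0; 2; 3]);
(8, [:: 0; 0; 0; 0; 0; 0; 0; 0; 0; 0; 0; 0; 0; 0; 1], [:: 2; 2; 4; 1; 3; 2; 0; 1; 0; 1; 4; 1; 3; 2; 0]);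
(2, [:: 0; 0; 0; 0; 0; 0; 0; 0; 0; 0; 0; 0; 0; 1; 0], [:: 3; 2; 0; 4; 1; 0; 1; 0; 2; 3; 2; 3; 4; 0; 1]);
(10, [:: 0; 0; 0; 0; 0; 0; 0; 0; 0; 0; 0; 0; 0; 0; 0], [:: 4; 5; 0; 1; 2; 0; 5; 3; 1; 1; 0; 0; 1; 1; 2]);
(7, [:: 0; 0; 0; 0; 0; 0; 0; 0; 0; 0; 0; 0; 0; 1; 0], [:: 0; 3; 1; 1; 2; 0; 2; 0; 3; 4; 2; 3; 2; 1; 2]);
(7, [:: 0; 0; 0; 0; 0; 0; 0; 0; 0; 0; 0; 0; 0; 0; 0], [:: 6; 1; 3; 1; 1; 1; 2; 0; 0; 1; 2; 3; 4; 0; 1]);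
(13, [:: 0; 0; 0; 0; 0; 0; 0; 1; 0; 0; 0; 0; 0; 0; 0], [:: 3; 0; 1; 2; 1; 5; 2; 0; 2; 3; 1; 2; 4; 0; 0]);
(10, [:: 0; 0; 0; 0; 0; 0; 0; 0; 0; 0; 0; 0; 0; 0; 0], [:: 0; 1; 3; 4; 1; 1; 0; 2; 1; 4; 0; 3; 2; 3; 1]);
(4, [:: 0; 0; 0; 0; 0; 0; 0; 0; 0; 0; 0; 0; 0; 0; 0], [:: 2; 5; 0; 1; 0; 1; 1; 3; 2; 5; 2; 2; 2; 0; 0]);
(14, [:: 0; 0; 0; 0; 0; 0; 0; 0; 0; 0; 0; 0; 0; 1; 0], [:: 1; 1; 5; 1; 2; 0; 5; 2; 0; 3; 3; 0; 2; 1; 0]);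
(12, [:: 0; 0; 0; 0; 0; 0; 0; 0; 0; 0; 0; 0; 0; 0; 0], [:: 3; 2; 4; 4; 0; 0; 2; 1; 0; 2; 3; 1; 0; 3; 1]);
(9, [:: 0; 0; 0; 1; 0; 0; 0; 0; 0; 0; 0; 0; 0; 0; 0], [:: 3; 2; 1; 2; 3; 1; 1; 4; 2; 0; 4; 1; 0; 0; 2]);
(3, [:: 0; 0; 0; 0; 0; 0; 0; 0; 0; 0; 0; 0; 0; 0; 0], [:: 3; 0; 2; 0; 1; 3; 1; 2; 3; 2; 2; 3; 1; 3; 0]);
(14, [:: 0; 0; 0; 1; 0; 0; 0; 0; 0; 0; 0; 0; 0; 0; 0], [:: 3; 6; 3; 1; 1; 2; 3; 0; 2; 1; 1; 3; 0; 0; 0]);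
(13, [:: 0; 0; 0; 0; 0; 0; 0; 0; 0; 0; 0; 0; 0; 0; 0], [:: 1; 3; 2; 1; 3; 3; 4; 0; 1; 0; 4; 2; 0; 0; 2]);
(1, [:: 0; 0; 0; 0; 0; 0; 0; 0; 0; 0; 0; 1; 0; 0; 0], [:: 0; 0; 3; 1; 2; 1; 2; 2; 3; 4; 4; 0; 0; 2; 2]);
(0, [:: 0; 0; 0; 0; 0; 0; 0; 0; 0; 0; 0; 1; 0; 0; 0], [:: 0; 1; 5; 2; 0; 1; 0; 3; 2; 1; 3; 1; 3; 1; 3]);
(2, [:: 0; 0; 0; 0; 0; 0; 0; 0; 0; 0; 0; 0; 0; 0; 1], [:: 3; 0; 0; 2; 1; 1; 5; 1; 2; 2; 2; 2; 3; 2; 0]);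
(8, [:: 0; 0; 0; 0; 0; 0; 0; 0; 0; 0; 0; 1; 0; 0; 0], [:: 1; 1; 4; 1; 2; 0; 3; 4; 0; 2; 2; 0; 3; 3; 0]);
(5, [:: 0; 0; 0; 0; 0; 0; 0; 0; 0; 0; 0; 0; 0; 0; 0], [:: 6; 3; 1; 4; 1; 0; 2; 0; 1; 0; 2; 1; 2; 1; 2]);
(11, [:: 0; 0; 0; 0; 0; 0; 0; 0; 0; 0; 0; 0; 0; 1; 0], [:: 2; 2; 1; 4; 1; 1; 2; 4; 1; 0; 2; 0; 4; 2; 0]);
(10, [:: 0; 0; 0; 0; 0; 0; 0; 0; 0; 0; 0; 0; 0; 0; 0], [:: 1; 2; 5; 2; 0; 4; 1; 1; 1; 1; 0; 2; 3; 0; 3]);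
(4, [:: 0; 0; 0; 0; 0; 0; 0; 0; 0; 0; 0; 0; 1; 0; 0], [:: 2; 0; 1; 3; 0; 1; 3; 1; 3; 5; 1; 1; 0; 3; 2]);
(11, [:: 0; 0; 0; 0; 0; 0; 0; 0; 0; 0; 0; 0; 0; 0; 0], [:: 2; 3; 0; 1; 0; 3; 2; 1; 3; 1; 4; 0; 3; 0; 3]);
(13, [:: 0; 0; 0; 0; 0; 0; 0; 0; 0; 0; 0; 0; 0; 0; 0], [:: 1; 4; 1; 3; 2; 0; 1; 1; 3; 3; 0; 1; 3; 0; 3]);
(13, [:: 0; 0; 0; 0; 1; 0; 0; 0; 0; 0; 0; 0; 0; 0; 0], [:: 2; 1; 2; 4; 1; 0; 0; 2; 2; 2; 3; 3; 1; 0; 3]);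
(14, [:: 0; 0; 0; 0; 0; 0; 0; 0; 1; 0; 0; 0; 0; 0; 0], [:: 0; 2; 0; 4; 2; 2; 3; 4; 1; 1; 1; 1; 3; 2; 0]);
(11, [:: 0; 0; 0; 0; 0; 0; 0; 0; 0; 0; 0; 0; 0; 0; 0], [:: 2; 2; 4; 1; 3; 3; 4; 3; 1; 1; 0; 0; 1; 1; 0]);
(6, [:: 0; 0; 0; 0; 0; 0; 0; 0; 0; 0; 0; 1; 0; 0; 0], [:: 1; 5; 3; 0; 1; 1; 0; 2; 0; 2; 4; 2; 1; 1; 3]);
(9, [:: 0; 0; 0; 0; 1; 0; 0; 0; 0; 0; 0; 0; 0; 0; 0], [:: 3; 2; 3; 2; 0; 1; 2; 3; 3; 0; 4; 1; 0; 0; 2]);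
(6, [:: 0; 0; 0; 0; 1; 0; 0; 0; 0; 0; 0; 0; 0; 0; 0], [:: 3; 3; 2; 4; 2; 1; 0; 0; 2; 0; 2; 1; 2; 3; 1]);
(8, [:: 0; 0; 0; 0; 0; 0; 0; 0; 0; 0; 0; 0; 0; 0; 0], [:: 2; 3; 0; 0; 3; 0; 1; 3; 0; 4; 4; 1; 1; 2; 2]);
(3, [:: 0; 0; 0; 0; 0; 0; 0; 0; 0; 0; 0; 0; 0; 0; 0], [:: 0; 2; 3; 0; 1; 4; 5; 1; 1; 5; 0; 1; 1; 1; 1]);
(12, [:: 0; 0; 0; 0; 0; 0; 0; 0; 0; 0; 0; 1; 0; 0; 0], [:: 4; 1; 2; 2; 3; 1; 1; 3; 3; 2; 1; 0; 0; 3; 0]);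
(2, [:: 0; 0; 0; 0; 0; 0; 0; 0; 0; 0; 0; 0; 0; 0; 0], [:: 0; 5; 0; 2; 1; 3; 1; 0; 3; 0; 1; 3; 3; 3; 1]);
(3, [:: 0; 0; 0; 0; 0; 0; 0; 0; 0; 0; 0; 0; 0; 0; 0], [:: 3; 0; 2; 0; 1; 2; 3; 4; 1; 1; 2; 0; 4; 2; 1]);
(14, [:: 0; 0; 0; 0; 0; 0; 0; 0; 0; 0; 0; 0; 0; 0; 0], [:: 1; 2; 3; 0; 1; 0; 5; 1; 2; 3; 2; 3; 2; 1; 0]);
(6, [:: 0; 0; 0; 0; 0; 0; 0; 0; 0; 0; 0; 1; 0; 0; 0], [:: 1; 1; 4; 1; 3; 3; 0; 1; 3; 5; 2; 1; 0; 0; 1]);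
(11, [:: 0; 0; 0; 0; 0; 0; 0; 0; 0; 0; 0; 0; 0; 0; 1], [:: 2; 0; 3; 4; 2; 3; 1; 1; 1; 1; 0; 0; 3; 2; 3]);
(2, [:: 0; 0; 0; 0; 0; 0; 0; 0; 0; 0; 1; 0; 0; 0; 0], [:: 2; 5; 0; 1; 1; 2; 3; 0; 0; 4; 0; 1; 3; 3; 1]);
(9, [:: 0; 0; 0; 0; 0; 0; 0; 1; 0; 0; 0; 0; 0; 0; 0], [:: 0; 4; 2; 0; 1; 1; 1; 1; 3; 0; 4; 2; 4; 1; 2]);
(8, [:: 0; 0; 1; 0; 0; 0; 0; 0; 0; 0; 0; 0; 0; 0; 0], [:: 2; 6; 0; 2; 2; 1; 0; 3; 0; 4; 1; 3; 1; 1; 0]);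
(11, [:: 0; 0; 0; 0; 0; 0; 0; 0; 0; 0; 0; 0; 1; 0; 0], [:: 3; 2; 5; 3; 1; 2; 0; 2; 0; 3; 0; 0; 1; 1; 3]);
(3, [:: 0; 0; 0; 0; 0; 0; 0; 0; 0; 0; 0; 0; 0; 0; 0], [:: 1; 0; 4; 0; 3; 4; 2; 2; 0; 0; 1; 1; 3; 2; 3]);
(11, [:: 0; 0; 0; 0; 0; 0; 0; 0; 0; 0; 0; 0; 0; 0; 0], [:: 2; 3; 1; 0; 2; 1; 5; 0; 1; 5; 1; 0; 2; 2; 1]);
(4, [:: 0; 0; 0; 0; 0; 0; 0; 0; 0; 0; 1; 0; 0; 1; 0], [:: 0; 2; 1; 4; 0; 3; 3; 0; 2; 2; 0; 2; 1; 3; 3]);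
(4, [:: 0; 0; 0; 0; 0; 0; 0; 0; 0; 0; 0; 0; 0; 0; 0], [:: 3; 2; 0; 1; 0; 6; 1; 3; 0; 1; 3; 1; 0; 3; 2]);
(10, [:: 0; 0; 0; 0; 0; 0; 0; 0; 1; 0; 0; 0; 0; 0; 0], [:: 1; 0; 2; 1; 3; 2; 4; 4; 1; 0; 0; 2; 1; 2; 3]);
(6, [:: 0; 0; 0; 0; 0; 0; 0; 0; 0; 0; 0; 0; 0; 0; 1], [:: 4; 2; 2; 0; 2; 2; 0; 0; 1; 4; 2; 2; 2; 0; 3]);
(4, [:: 0; 0; 0; 0; 0; 0; 0; 0; 0; 0; 1; 0; 0; 0; 0], [:: 0; 3; 1; 2; 0; 1; 4; 3; 0; 3; 1; 2; 1; 3; 2]);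
(7, [:: 0; 0; 0; 0; 0; 0; 0; 0; 0; 0; 1; 0; 0; 0; 0], [:: 3; 1; 1; 3; 3; 0; 3; 0; 2; 2; 1; 3; 0; 3; 1]);
(4, [:: 0; 0; 0; 0; 0; 0; 0; 0; 0; 0; 0; 0; 0; 1; 0], [:: 2; 3; 0; 1; 0; 1; 3; 4; 2; 5; 1; 1; 2; 1; 0]);
(14, [:: 0; 0; 0; 0; 0; 0; 0; 0; 0; 0; 0; 0; 0; 0; 0], [:: 0; 6; 1; 2; 2; 6; 1; 2; 1; 2; 1; 1; 1; 0; 0]);
(4, [:: 0; 0; 0; 0; 0; 0; 0; 0; 0; 0; 0; 0; 0; 0; 1], [:: 1; 3; 2; 0; 0; 1; 5; 2; 0; 2; 3; 2; 3; 1; 1]);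
(14, [:: 0; 0; 0; 0; 0; 0; 0; 0; 1; 0; 0; 0; 0; 0; 0], [:: 2; 2; 1; 3; 1; 6; 1; 2; 2; 1; 2; 0; 0; 3; 0]);
(13, [:: 0; 0; 0; 0; 0; 0; 0; 0; 0; 0; 0; 0; 0; 0; 1], [:: 3; 1; 1; 2; 0; 2; 4; 4; 0; 4; 0; 2; 1; 0; 2]);
(13, [:: 0; 0; 0; 0; 0; 0; 0; 0; 1; 0; 0; 0; 0; 0; 0], [:: 3; 3; 3; 3; 3; 1; 2; 2; 1; 1; 0; 2; 0; 0; 2]);
(11, [:: 0; 0; 0; 0; 0; 0; 0; 0; 1; 0; 0; 0; 0; 0; 0], [:: 2; 0; 0; 2; 3; 3; 4; 1; 3; 1; 1; 0; 2; 1; 3]);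
(10, [:: 0; 0; 0; 0; 0; 0; 0; 0; 0; 0; 0; 0; 0; 0; 0], [:: 3; 1; 2; 4; 1; 4; 0; 0; 1; 1; 0; 1; 2; 3; 3]);
(7, [:: 0; 0; 0; 0; 0; 0; 0; 0; 0; 0; 0; 0; 0; 0; 0], [:: 0; 0; 5; 3; 1; 2; 0; 0; 2; 2; 3; 2; 4; 1; 1]);
(0, [:: 0; 0; 0; 0; 0; 0; 0; 1; 0; 0; 0; 0; 0; 0; 0], [:: 0; 0; 4; 1; 3; 2; 5; 0; 2; 0; 1; 2; 1; 2; 3]);
(6, [:: 0; 0; 0; 0; 0; 0; 0; 0; 0; 0; 0; 0; 0; 0; 1], [:: 2; 2; 1; 3; 0; 3; 0; 3; 2; 2; 1; 3; 4; 0; 0]);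
(3, [:: 0; 0; 0; 0; 0; 0; 0; 0; 0; 0; 0; 0; 0; 1; 0], [:: 0; 2; 3; 0; 1; 3; 1; 1; 2; 5; 3; 0; 2; 2; 1]);
(3, [:: 0; 0; 0; 0; 0; 0; 0; 0; 0; 0; 0; 0; 0; 0; 1], [:: 3; 1; 2; 0; 0; 3; 3; 0; 3; 1; 2; 1; 1; 3; 3]);
(7, [:: 0; 0; 0; 0; 1; 0; 0; 0; 0; 0; 0; 0; 0; 0; 0], [:: 1; 2; 2; 3; 3; 5; 1; 0; 0; 2; 0; 3; 0; 1; 3]);
(3, [:: 0; 0; 0; 0; 0; 0; 0; 0; 0; 0; 0; 1; 0; 0; 0], [:: 1; 2; 4; 0; 0; 0; 5; 3; 1; 3; 1; 1; 1; 2; 2]);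
(0, [:: 0; 0; 0; 0; 0; 0; 1; 0; 0; 0; 0; 0; 0; 0; 0], [:: 0; 2; 1; 3; 0; 3; 0; 3; 3; 3; 1; 1; 1; 2; 3]);
(14, [:: 0; 0; 0; 0; 0; 0; 0; 0; 1; 0; 0; 0; 0; 0; 0], [:: 3; 2; 3; 1; 0; 1; 1; 3; 2; 2; 4; 2; 0; 2; 0]);
(1, [:: 0; 0; 0; 0; 0; 0; 0; 0; 0; 0; 0; 0; 0; 0; 0], [:: 1; 0; 0; 4; 2; 1; 1; 4; 1; 4; 1; 1; 0; 3; 3]);
(14, [:: 0; 0; 0; 1; 0; 0; 0; 0; 0; 0; 0; 0; 0; 0; 0], [:: 2; 1; 2; 0; 3; 1; 5; 1; 2; 0; 1; 3; 3; 2; 0]);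
(2, [:: 0; 0; 0; 0; 0; 0; 0; 0; 1; 0; 0; 0; 0; 0; 0], [:: 1; 0; 0; 3; 2; 2; 2; 2; 3; 3; 3; 3; 1; 0; 1]);
(9, [:: 0; 0; 0; 0; 0; 0; 0; 0; 0; 0; 0; 0; 0; 0; 0], [:: 5; 2; 1; 3; 3; 2; 0; 4; 1; 0; 2; 1; 1; 1; 0]);
(13, [:: 0; 0; 0; 0; 0; 0; 0; 0; 0; 0; 0; 0; 0; 0; 0], [:: 3; 1; 1; 0; 2; 3; 0; 1; 2; 2; 2; 3; 4; 0; 2]);
(0, [:: 0; 0; 0; 0; 0; 0; 0; 0; 0; 0; 1; 0; 0; 0; 0], [:: 0; 2; 3; 4; 1; 6; 2; 2; 1; 2; 0; 1; 1; 1; 0]);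
(3, [:: 0; 0; 0; 0; 0; 0; 0; 0; 0; 0; 0; 0; 0; 0; 0], [:: 5; 1; 5; 0; 0; 0; 1; 3; 2; 2; 0; 0; 4; 2; 1]);
(6, [:: 0; 0; 0; 0; 0; 0; 0; 0; 0; 0; 0; 0; 0; 0; 0], [:: 6; 4; 2; 0; 1; 2; 0; 1; 0; 1; 4; 0; 1; 2; 2]);
(3, [:: 0; 0; 0; 0; 0; 0; 0; 0; 0; 0; 0; 0; 0; 1; 0], [:: 3; 5; 3; 0; 3; 1; 3; 0; 0; 0; 1; 1; 4; 1; 1]);
(2, [:: 0; 0; 0; 0; 0; 0; 0; 0; 0; 0; 0; 0; 0; 1; 0], [:: 0; 2; 0; 2; 3; 0; 3; 1; 1; 2; 2; 3; 4; 2; 1]);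
(2, [:: 0; 0; 0; 0; 0; 0; 0; 0; 0; 0; 0; 0; 0; 1; 0], [:: 3; 2; 0; 0; 1; 1; 1; 4; 2; 0; 3; 1; 2; 3; 3]);
(9, [:: 0; 0; 0; 0; 0; 0; 0; 0; 0; 0; 0; 0; 0; 0; 0], [:: 4; 4; 0; 3; 1; 2; 4; 1; 0; 0; 0; 3; 1; 3; 0]);
(12, [:: 0; 0; 0; 0; 0; 0; 0; 1; 1; 0; 0; 0; 0; 0; 0], [:: 4; 1; 4; 3; 1; 2; 4; 4; 0; 1; 0; 1; 0; 0; 1]);
(4, [:: 0; 0; 0; 0; 0; 0; 0; 0; 1; 0; 0; 0; 0; 0; 0], [:: 0; 1; 4; 2; 0; 4; 4; 2; 0; 0; 1; 3; 1; 2; 2]);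
(5, [:: 0; 0; 0; 0; 0; 0; 0; 0; 0; 0; 0; 1; 0; 0; 0], [:: 4; 1; 3; 1; 1; 0; 0; 1; 2; 3; 2; 3; 2; 0; 3]);
(8, [:: 0; 0; 0; 0; 0; 0; 0; 0; 0; 0; 0; 0; 0; 1; 0], [:: 1; 2; 0; 1; 3; 2; 3; 0; 0; 1; 4; 2; 4; 1; 2]);
(9, [:: 0; 0; 0; 0; 1; 0; 0; 0; 0; 0; 0; 0; 0; 0; 0], [:: 5; 2; 1; 4; 2; 2; 2; 1; 1; 0; 4; 0; 0; 1; 1]);
(8, [:: 0; 0; 0; 0; 0; 0; 0; 0; 0; 0; 0; 0; 1; 0; 0], [:: 3; 1; 2; 0; 0; 3; 2; 4; 0; 1; 3; 1; 0; 3; 3]);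
(4, [:: 0; 0; 0; 0; 0; 0; 0; 1; 0; 0; 0; 0; 0; 0; 0], [:: 0; 5; 2; 4; 0; 3; 1; 0; 2; 2; 2; 2; 0; 2; 1]);
(3, [:: 0; 0; 0; 0; 0; 0; 0; 0; 0; 0; 0; 0; 0; 1; 0], [:: 3; 2; 1; 0; 0; 3; 4; 1; 0; 2; 1; 1; 2; 3; 3]);
(7, [:: 0; 0; 0; 1; 0; 0; 0; 0; 0; 0; 0; 0; 0; 0; 0], [:: 2; 3; 4; 0; 3; 0; 4; 0; 3; 1; 1; 0; 1; 1; 3]);
(0, [:: 0; 0; 0; 0; 0; 0; 0; 0; 0; 0; 0; 0; 0; 1; 0], [:: 0; 2; 2; 1; 3; 3; 2; 2; 3; 0; 1; 3; 1; 0; 3]);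
(4, [:: 0; 0; 0; 0; 0; 0; 0; 0; 0; 0; 0; 1; 0; 0; 0], [:: 2; 0; 1; 3; 0; 2; 4; 2; 3; 1; 1; 2; 4; 1; 0]);
(2, [:: 0; 0; 0; 0; 0; 0; 0; 0; 0; 0; 0; 0; 0; 0; 0], [:: 1; 3; 0; 0; 3; 5; 1; 1; 0; 1; 1; 3; 4; 2; 1]);
(14, [:: 0; 0; 0; 0; 0; 0; 0; 0; 0; 0; 1; 0; 0; 0; 0], [:: 2; 3; 0; 1; 2; 0; 1; 2; 3; 5; 1; 2; 1; 3; 0]);
(3, [:: 0; 0; 0; 0; 0; 0; 0; 1; 0; 0; 0; 0; 0; 0; 0], [:: 3; 2; 1; 0; 0; 3; 5; 1; 2; 1; 0; 3; 3; 1; 1]);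
(1, [:: 0; 0; 0; 0; 0; 0; 0; 0; 0; 0; 0; 0; 1; 0; 0], [:: 2; 0; 1; 4; 1; 4; 0; 0; 1; 1; 1; 3; 3; 2; 3]);
(11, [:: 0; 0; 0; 0; 0; 0; 0; 0; 0; 0; 0; 0; 0; 0; 1], [:: 7; 0; 0; 1; 2; 2; 2; 2; 0; 2; 2; 0; 2; 3; 1]);
(9, [:: 0; 0; 0; 0; 0; 0; 0; 0; 0; 0; 0; 0; 0; 1; 0], [:: 2; 1; 1; 4; 2; 6; 2; 2; 1; 0; 1; 0; 3; 0; 1]);
(4, [:: 0; 0; 0; 0; 0; 0; 0; 0; 0; 0; 0; 1; 0; 0; 0], [:: 0; 2; 3; 4; 0; 1; 2; 1; 0; 4; 2; 1; 0; 3; 3]);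
(3, [:: 0; 0; 0; 0; 0; 0; 0; 0; 0; 0; 0; 1; 0; 0; 0], [:: 2; 0; 1; 0; 3; 5; 2; 1; 1; 1; 4; 0; 4; 1; 1]);
(11, [:: 0; 0; 0; 0; 0; 0; 0; 0; 0; 0; 0; 0; 0; 0; 0], [:: 5; 6; 1; 1; 1; 1; 1; 3; 0; 3; 0; 0; 1; 0; 3]);
(9, [:: 0; 0; 0; 0; 0; 0; 0; 0; 0; 0; 0; 0; 0; 0; 0], [:: 0; 4; 5; 1; 2; 1; 1; 3; 0; 0; 1; 1; 4; 1; 2]);
(8, [:: 0; 0; 0; 0; 0; 0; 0; 0; 0; 0; 0; 1; 0; 0; 0], [:: 3; 0; 4; 1; 1; 0; 1; 2; 0; 5; 3; 1; 2; 1; 2]);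
(9, [:: 0; 0; 0; 0; 1; 0; 0; 0; 0; 0; 0; 0; 0; 0; 0], [:: 1; 4; 1; 3; 0; 4; 1; 1; 3; 0; 1; 1; 4; 2; 0]);
(1, [:: 0; 0; 0; 0; 0; 0; 0; 0; 0; 0; 0; 0; 0; 0; 1], [:: 1; 0; 2; 0; 3; 2; 1; 4; 1; 3; 4; 1; 2; 0; 2]);
(2, [:: 0; 0; 0; 0; 0; 0; 0; 0; 1; 0; 0; 0; 0; 0; 1], [:: 3; 2; 0; 1; 0; 5; 3; 1; 3; 1; 2; 2; 2; 1; 0]);
(6, [:: 0; 0; 0; 0; 1; 0; 0; 0; 0; 0; 0; 0; 0; 0; 0], [:: 2; 1; 5; 1; 2; 2; 0; 1; 3; 1; 0; 0; 4; 2; 2]);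
(1, [:: 0; 0; 0; 0; 0; 0; 0; 0; 0; 0; 0; 1; 0; 0; 0], [:: 0; 0; 1; 3; 2; 0; 3; 1; 2; 2; 2; 3; 1; 3; 3]);
(12, [:: 0; 0; 0; 0; 0; 0; 0; 0; 0; 0; 0; 1; 0; 0; 0], [:: 0; 2; 1; 3; 0; 2; 2; 4; 2; 3; 3; 2; 0; 1; 1]);
(0, [:: 0; 0; 0; 0; 0; 0; 0; 0; 0; 0; 1; 0; 0; 0; 0], [:: 0; 3; 0; 1; 2; 0; 2; 4; 2; 1; 3; 2; 2; 1; 3]);
(14, [:: 0; 0; 0; 0; 0; 0; 0; 0; 0; 0; 0; 0; 0; 1; 0], [:: 2; 2; 4; 4; 1; 1; 2; 0; 1; 0; 4; 1; 4; 0; 0]);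
(14, [:: 0; 0; 0; 0; 0; 0; 0; 0; 0; 0; 0; 0; 0; 1; 0], [:: 7; 5; 1; 1; 0; 0; 1; 2; 3; 2; 3; 0; 1; 0; 0]);
(5, [:: 0; 0; 0; 0; 1; 0; 0; 0; 0; 0; 0; 0; 0; 0; 0], [:: 7; 2; 2; 1; 1; 0; 1; 3; 0; 2; 1; 3; 0; 1; 2]);
(5, [:: 0; 0; 0; 0; 1; 0; 0; 0; 0; 0; 0; 0; 0; 0; 0], [:: 2; 4; 5; 1; 1; 0; 3; 1; 0; 0; 1; 1; 1; 3; 3]);
(0, [:: 0; 0; 0; 0; 0; 0; 0; 0; 0; 0; 0; 0; 0; 0; 0], [:: 0; 6; 2; 0; 1; 5; 0; 1; 3; 0; 0; 3; 1; 2; 2]);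
(0, [:: 0; 0; 0; 0; 0; 0; 0; 0; 0; 0; 1; 0; 0; 0; 0], [:: 0; 3; 2; 0; 1; 4; 1; 0; 3; 1; 2; 3; 3; 3; 0]);
(8, [:: 0; 0; 0; 0; 0; 0; 0; 0; 0; 0; 0; 0; 0; 0; 0], [:: 3; 6; 4; 2; 0; 2; 1; 0; 0; 1; 2; 1; 2; 2; 0]);
(7, [:: 0; 0; 0; 0; 0; 0; 0; 0; 0; 0; 0; 0; 0; 0; 0], [:: 7; 5; 1; 1; 0; 1; 0; 0; 3; 2; 0; 1; 2; 1; 2]);
(10, [:: 0; 0; 0; 0; 0; 0; 0; 0; 0; 0; 0; 0; 0; 0; 0], [:: 4; 3; 0; 4; 2; 1; 1; 2; 0; 5; 0; 2; 1; 0; 1]);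
(4, [:: 0; 0; 0; 0; 0; 0; 0; 0; 0; 0; 0; 0; 0; 0; 0], [:: 3; 0; 1; 2; 0; 1; 1; 2; 3; 5; 3; 1; 2; 0; 2]);
(13, [:: 0; 0; 0; 0; 0; 0; 0; 0; 0; 0; 0; 1; 0; 0; 0], [:: 2; 3; 3; 4; 2; 1; 0; 1; 2; 3; 1; 0; 4; 0; 0]);
(6, [:: 0; 0; 0; 0; 0; 0; 0; 0; 0; 0; 0; 0; 1; 0; 1], [:: 3; 3; 0; 1; 0; 3; 0; 0; 2; 4; 2; 1; 3; 3; 1]);
(9, [:: 0; 0; 0; 0; 0; 0; 1; 0; 0; 0; 0; 0; 0; 1; 0], [:: 0; 2; 1; 0; 3; 3; 5; 2; 2; 0; 3; 1; 2; 1; 1]);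
(13, [:: 0; 0; 0; 0; 0; 0; 0; 0; 1; 0; 0; 0; 0; 0; 0], [:: 3; 0; 1; 2; 0; 2; 4; 4; 1; 2; 1; 1; 2; 0; 3]);
(7, [:: 0; 0; 0; 0; 0; 0; 0; 0; 0; 1; 0; 0; 0; 0; 0], [:: 5; 0; 1; 2; 2; 1; 0; 0; 2; 2; 2; 2; 3; 1; 3]);
(6, [:: 0; 0; 0; 0; 1; 0; 0; 0; 0; 0; 0; 0; 0; 0; 0], [:: 1; 2; 1; 3; 3; 1; 0; 2; 0; 2; 3; 0; 3; 3; 2]);
(12, [:: 0; 0; 0; 0; 0; 0; 1; 0; 0; 0; 0; 0; 0; 0; 0], [:: 1; 3; 2; 1; 0; 6; 0; 1; 2; 4; 2; 2; 0; 2; 0]);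
(5, [:: 0; 0; 1; 0; 0; 0; 0; 0; 0; 0; 0; 0; 0; 0; 0], [:: 1; 1; 0; 4; 2; 0; 5; 2; 1; 2; 1; 2; 0; 2; 3]);
(3, [:: 0; 0; 0; 0; 0; 0; 0; 0; 0; 0; 0; 1; 0; 0; 0], [:: 0; 4; 5; 0; 1; 3; 2; 1; 1; 1; 1; 2; 2; 3; 0]);
(6, [:: 0; 0; 0; 0; 0; 0; 0; 0; 0; 0; 0; 0; 0; 0; 1], [:: 3; 1; 2; 0; 1; 3; 0; 2; 1; 4; 0; 2; 4; 2; 1]);
(7, [:: 0; 0; 0; 0; 0; 0; 0; 0; 0; 0; 0; 0; 0; 0; 0], [:: 4; 1; 0; 0; 2; 6; 2; 0; 2; 4; 3; 1; 0; 0; 1]);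
(13, [:: 0; 0; 0; 0; 0; 0; 0; 1; 0; 0; 0; 0; 0; 0; 0], [:: 2; 0; 3; 1; 0; 2; 5; 1; 2; 3; 2; 3; 1; 0; 1]);
(3, [:: 0; 0; 0; 0; 0; 0; 0; 0; 0; 0; 0; 1; 0; 0; 0], [:: 2; 1; 3; 0; 0; 4; 1; 2; 3; 1; 3; 3; 0; 1; 2]);
(14, [:: 0; 0; 0; 0; 0; 0; 0; 0; 0; 0; 0; 0; 0; 0; 0], [:: 0; 6; 0; 3; 1; 2; 3; 4; 0; 1; 1; 1; 4; 0; 0]);
(9, [:: 0; 0; 1; 0; 0; 0; 0; 0; 0; 0; 0; 0; 0; 0; 0], [:: 7; 2; 1; 2; 1; 1; 0; 1; 3; 0; 1; 3; 3; 1; 0]);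
(9, [:: 0; 0; 0; 0; 1; 0; 0; 0; 0; 0; 0; 0; 0; 0; 0], [:: 4; 1; 2; 1; 3; 2; 4; 2; 3; 0; 0; 2; 2; 0; 0]);
(0, [:: 0; 0; 0; 0; 0; 0; 0; 0; 1; 0; 0; 0; 0; 0; 0], [:: 0; 1; 3; 2; 1; 2; 2; 3; 3; 4; 4; 0; 0; 0; 1]);
(5, [:: 0; 0; 0; 0; 0; 0; 0; 0; 0; 0; 0; 1; 0; 0; 0], [:: 0; 4; 1; 3; 1; 0; 1; 2; 2; 1; 4; 0; 2; 2; 3]);
(9, [:: 0; 0; 0; 1; 0; 0; 0; 0; 0; 0; 0; 0; 0; 0; 0], [:: 3; 2; 4; 3; 1; 0; 2; 1; 3; 0; 1; 0; 2; 3; 1]);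
(13, [:: 0; 0; 0; 0; 0; 0; 0; 0; 0; 0; 0; 1; 0; 0; 0], [:: 6; 1; 1; 1; 3; 0; 1; 4; 1; 1; 4; 1; 0; 0; 2]);
(4, [:: 0; 0; 0; 0; 0; 0; 0; 0; 0; 0; 0; 0; 0; 0; 0], [:: 5; 1; 0; 3; 0; 0; 3; 1; 1; 5; 3; 0; 0; 2; 2]);
(13, [:: 0; 0; 0; 1; 0; 0; 0; 0; 0; 0; 0; 0; 0; 0; 0], [:: 1; 4; 1; 3; 2; 6; 1; 1; 2; 1; 0; 0; 2; 0; 2]);
(11, [:: 0; 0; 0; 0; 0; 0; 0; 0; 1; 0; 0; 0; 0; 0; 1], [:: 3; 1; 0; 2; 0; 2; 2; 4; 0; 1; 3; 0; 2; 3; 3]);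
(12, [:: 0; 0; 0; 0; 0; 0; 0; 1; 0; 0; 0; 1; 0; 0; 0], [:: 0; 1; 3; 0; 3; 1; 2; 3; 3; 2; 2; 0; 0; 3; 3]);
(1, [:: 0; 0; 0; 0; 0; 0; 0; 0; 0; 0; 0; 0; 0; 0; 1], [:: 2; 0; 4; 1; 0; 1; 1; 1; 3; 4; 2; 3; 2; 0; 2]);
(11, [:: 0; 0; 0; 0; 0; 0; 0; 0; 0; 0; 0; 0; 0; 1; 0], [:: 1; 5; 1; 2; 0; 2; 1; 0; 3; 1; 2; 0; 2; 3; 3]);
(2, [:: 0; 0; 0; 0; 0; 0; 0; 0; 1; 0; 0; 0; 0; 0; 0], [:: 4; 2; 0; 1; 0; 1; 1; 3; 0; 1; 2; 3; 3; 3; 2]);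
(11, [:: 0; 0; 0; 0; 1; 0; 0; 0; 0; 0; 0; 0; 0; 0; 0], [:: 1; 6; 2; 2; 0; 3; 1; 3; 3; 1; 0; 0; 1; 0; 3]);
(14, [:: 0; 0; 0; 0; 0; 0; 0; 0; 0; 0; 0; 0; 0; 0; 0], [:: 0; 0; 1; 2; 3; 3; 0; 1; 3; 5; 1; 2; 3; 2; 0]);
(10, [:: 0; 0; 0; 0; 0; 0; 0; 0; 0; 0; 0; 0; 0; 0; 1], [:: 4; 0; 1; 3; 0; 4; 4; 1; 3; 1; 0; 1; 1; 1; 2]);
(7, [:: 0; 0; 0; 0; 0; 0; 0; 0; 0; 0; 0; 0; 0; 0; 0], [:: 1; 6; 0; 1; 2; 3; 0; 0; 1; 3; 2; 1; 1; 2; 3]);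
(8, [:: 0; 0; 0; 0; 0; 0; 0; 0; 0; 0; 1; 0; 0; 0; 0], [:: 2; 1; 4; 0; 0; 4; 1; 1; 0; 3; 3; 3; 0; 2; 2]);
(2, [:: 0; 0; 0; 0; 0; 0; 0; 0; 0; 1; 0; 0; 0; 0; 0], [:: 3; 1; 0; 2; 0; 2; 5; 1; 0; 3; 1; 3; 2; 2; 1]);
(9, [:: 0; 0; 0; 0; 0; 0; 1; 0; 0; 0; 0; 0; 0; 0; 0], [:: 7; 1; 4; 1; 1; 1; 0; 2; 1; 0; 4; 1; 2; 1; 0]);
(13, [:: 0; 0; 0; 0; 0; 0; 0; 0; 0; 0; 0; 0; 0; 0; 1], [:: 2; 1; 2; 4; 1; 6; 2; 0; 1; 4; 0; 1; 2; 0; 0]);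
(5, [:: 0; 0; 0; 0; 0; 0; 0; 0; 0; 0; 0; 0; 0; 0; 0], [:: 1; 0; 2; 3; 3; 0; 0; 4; 1; 2; 4; 0; 4; 1; 1]);
(2, [:: 0; 0; 0; 0; 0; 0; 0; 0; 0; 0; 0; 0; 1; 1; 0], [:: 3; 2; 0; 1; 0; 3; 2; 1; 2; 5; 1; 0; 3; 2; 1]);
(3, [:: 0; 0; 0; 0; 0; 0; 0; 0; 0; 0; 0; 0; 0; 1; 0], [:: 0; 1; 2; 0; 3; 1; 2; 4; 1; 2; 2; 2; 4; 2; 0]);
(1, [:: 0; 0; 0; 0; 0; 1; 0; 0; 0; 0; 0; 0; 0; 0; 0], [:: 2; 0; 1; 3; 0; 0; 2; 2; 3; 1; 1; 3; 4; 2; 2]);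
(4, [:: 0; 0; 0; 0; 0; 0; 0; 0; 0; 0; 0; 0; 0; 0; 0], [:: 0; 3; 5; 1; 0; 1; 0; 2; 2; 4; 3; 0; 0; 3; 2]);
(9, [:: 0; 0; 0; 0; 0; 0; 0; 1; 0; 0; 0; 0; 0; 0; 0], [:: 1; 2; 2; 3; 3; 4; 2; 4; 1; 0; 1; 1; 2; 0; 0]);
(1, [:: 0; 0; 0; 0; 0; 0; 0; 0; 0; 0; 0; 0; 0; 0; 0], [:: 1; 0; 4; 0; 2; 3; 1; 2; 2; 3; 4; 2; 1; 1; 0]);
(3, [:: 0; 0; 0; 0; 0; 0; 0; 0; 0; 0; 1; 0; 0; 0; 0], [:: 3; 2; 1; 0; 0; 0; 5; 3; 1; 1; 1; 2; 2; 2; 3]);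
(12, [:: 0; 0; 0; 0; 1; 0; 0; 0; 0; 0; 0; 0; 0; 0; 0], [:: 1; 3; 2; 3; 2; 2; 4; 0; 3; 5; 1; 0; 0; 0; 0]);
(5, [:: 0; 1; 0; 0; 0; 0; 0; 0; 0; 0; 0; 0; 0; 0; 0], [:: 3; 1; 1; 3; 2; 0; 2; 4; 2; 1; 4; 0; 0; 1; 2]);
(11, [:: 0; 0; 0; 0; 1; 0; 0; 0; 1; 0; 0; 0; 0; 0; 0], [:: 2; 5; 3; 4; 0; 1; 3; 1; 1; 1; 0; 0; 4; 1; 0]);
(3, [:: 0; 0; 0; 0; 0; 0; 1; 0; 0; 0; 0; 0; 0; 0; 0], [:: 1; 3; 0; 0; 2; 3; 2; 3; 3; 1; 2; 1; 4; 1; 0]);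
(3, [:: 0; 0; 0; 0; 0; 0; 0; 0; 0; 0; 0; 1; 0; 0; 0], [:: 0; 2; 1; 0; 3; 2; 1; 3; 0; 5; 1; 2; 2; 3; 1]);
(11, [:: 0; 0; 0; 0; 0; 0; 0; 0; 0; 0; 0; 0; 1; 0; 0], [:: 2; 2; 4; 1; 3; 1; 4; 0; 1; 1; 0; 0; 3; 3; 1]);
(6, [:: 0; 0; 0; 1; 0; 0; 0; 0; 0; 0; 0; 0; 0; 0; 0], [:: 2; 2; 3; 0; 3; 1; 0; 0; 3; 2; 1; 3; 4; 0; 2]);
(4, [:: 0; 0; 0; 0; 0; 0; 0; 0; 0; 0; 0; 0; 0; 0; 0], [:: 2; 3; 3; 0; 0; 4; 4; 0; 0; 2; 2; 0; 4; 2; 0]);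
(9, [:: 0; 0; 0; 0; 0; 0; 0; 0; 0; 0; 0; 0; 0; 1; 0], [:: 3; 1; 5; 1; 2; 0; 4; 1; 0; 0; 1; 2; 1; 3; 2]);
(12, [:: 0; 0; 0; 0; 0; 0; 0; 0; 1; 0; 0; 0; 0; 0; 0], [:: 3; 1; 1; 4; 1; 4; 2; 1; 0; 4; 0; 3; 0; 0; 2]);
(3, [:: 0; 0; 0; 0; 0; 0; 0; 0; 0; 0; 1; 0; 0; 1; 0], [:: 1; 3; 2; 0; 3; 0; 4; 1; 0; 2; 0; 3; 1; 3; 3]);
(0, [:: 0; 0; 0; 0; 0; 0; 0; 0; 0; 0; 0; 0; 0; 2; 0], [:: 0; 5; 3; 1; 0; 3; 5; 3; 1; 0; 2; 0; 2; 0; 1]);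
(14, [:: 0; 0; 0; 0; 0; 0; 0; 0; 1; 0; 0; 0; 0; 0; 0], [:: 1; 3; 2; 4; 0; 2; 1; 4; 0; 0; 1; 2; 4; 2; 0]);
(12, [:: 0; 0; 0; 0; 0; 0; 0; 0; 0; 0; 1; 1; 0; 0; 0], [:: 3; 1; 2; 4; 0; 1; 2; 3; 1; 2; 3; 3; 0; 1; 0]);
(14, [:: 0; 0; 0; 0; 1; 0; 0; 0; 0; 0; 0; 0; 0; 0; 0], [:: 2; 1; 3; 3; 1; 3; 0; 4; 1; 1; 4; 1; 0; 2; 0]);
(6, [:: 0; 0; 0; 1; 0; 0; 0; 0; 0; 0; 0; 0; 0; 0; 0], [:: 1; 1; 3; 2; 1; 2; 0; 2; 3; 4; 0; 3; 0; 2; 2]);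
(3, [:: 0; 0; 0; 0; 0; 0; 0; 0; 0; 1; 0; 0; 0; 0; 0], [:: 3; 0; 1; 0; 2; 2; 1; 4; 1; 3; 2; 2; 2; 0; 3]);
(12, [:: 0; 1; 0; 0; 0; 0; 0; 0; 0; 0; 0; 0; 0; 0; 0], [:: 7; 0; 2; 2; 2; 1; 1; 0; 2; 2; 4; 1; 0; 2; 0]);
(3, [:: 0; 0; 0; 0; 0; 0; 0; 0; 0; 0; 1; 0; 0; 0; 0], [:: 0; 2; 3; 0; 3; 3; 4; 0; 3; 2; 3; 1; 0; 1; 1]);
(2, [:: 0; 0; 0; 0; 0; 0; 0; 0; 0; 0; 0; 0; 0; 1; 0], [:: 2; 1; 0; 3; 0; 4; 1; 2; 3; 3; 2; 1; 1; 0; 3]);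
(5, [:: 0; 0; 0; 1; 0; 0; 0; 0; 0; 0; 0; 0; 0; 0; 0], [:: 6; 1; 5; 1; 1; 0; 1; 2; 1; 2; 4; 1; 1; 0; 0]);
(8, [:: 0; 0; 0; 0; 0; 0; 0; 0; 0; 0; 0; 1; 0; 0; 0], [:: 1; 0; 2; 4; 1; 1; 0; 3; 0; 2; 2; 3; 3; 3; 1]);
(7, [:: 0; 0; 0; 0; 1; 0; 0; 0; 0; 0; 0; 0; 0; 0; 0], [:: 7; 2; 4; 1; 1; 2; 1; 0; 0; 3; 1; 1; 3; 0; 0]);
(13, [:: 0; 0; 0; 0; 0; 1; 0; 0; 0; 0; 0; 0; 0; 0; 0], [:: 7; 2; 3; 0; 2; 0; 1; 2; 3; 2; 0; 0; 2; 0; 2]);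
(6, [:: 0; 0; 0; 0; 0; 0; 0; 0; 0; 1; 0; 1; 0; 0; 0], [:: 1; 0; 3; 3; 0; 4; 0; 4; 2; 1; 4; 0; 1; 1; 2]);
(13, [:: 0; 0; 0; 0; 0; 0; 0; 0; 0; 0; 0; 1; 0; 0; 0], [:: 3; 0; 2; 0; 1; 4; 1; 4; 2; 2; 2; 2; 3; 0; 0]);
(4, [:: 0; 0; 0; 0; 0; 0; 0; 0; 0; 0; 0; 0; 0; 0; 0], [:: 2; 1; 4; 0; 0; 1; 4; 1; 1; 2; 3; 3; 0; 1; 3]);
(5, [:: 0; 0; 0; 0; 0; 0; 0; 0; 0; 0; 0; 0; 0; 0; 0], [:: 2; 6; 0; 2; 1; 0; 3; 4; 1; 0; 0; 2; 3; 1; 1]);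
(9, [:: 0; 0; 0; 0; 0; 0; 0; 1; 1; 0; 0; 0; 0; 0; 0], [:: 1; 0; 1; 3; 2; 3; 4; 4; 0; 0; 1; 2; 0; 2; 3]);
(2, [:: 0; 0; 0; 0; 0; 0; 0; 0; 0; 1; 0; 0; 0; 0; 0], [:: 3; 2; 0; 0; 1; 2; 2; 4; 2; 0; 2; 1; 1; 3; 3]);
(2, [:: 0; 0; 0; 0; 0; 0; 0; 0; 0; 0; 0; 0; 0; 0; 1], [:: 2; 2; 0; 4; 1; 5; 1; 1; 0; 2; 4; 0; 1; 0; 3]);
(10, [:: 0; 0; 0; 1; 0; 0; 0; 0; 1; 0; 0; 0; 0; 0; 0], [:: 2; 2; 1; 2; 3; 5; 2; 4; 0; 1; 0; 0; 0; 3; 1]);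
(6, [:: 0; 0; 0; 1; 0; 0; 0; 0; 0; 0; 0; 0; 0; 0; 0], [:: 1; 3; 3; 0; 1; 0; 0; 4; 1; 5; 2; 1; 3; 1; 1]);
(9, [:: 0; 0; 1; 0; 0; 0; 0; 0; 0; 0; 0; 0; 0; 0; 0], [:: 3; 1; 5; 2; 2; 1; 1; 2; 0; 0; 2; 2; 0; 3; 2]);
(3, [:: 0; 0; 0; 0; 0; 0; 0; 0; 0; 0; 0; 0; 0; 1; 0], [:: 4; 1; 0; 0; 3; 3; 4; 2; 3; 1; 2; 0; 3; 0; 0]);
(11, [:: 0; 0; 0; 0; 0; 0; 0; 0; 0; 0; 0; 0; 0; 0; 1], [:: 3; 5; 1; 0; 1; 2; 5; 0; 2; 1; 0; 0; 4; 0; 2]);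
(0, [:: 0; 0; 0; 0; 0; 0; 0; 1; 0; 0; 0; 0; 0; 0; 0], [:: 0; 1; 2; 3; 0; 2; 1; 2; 3; 3; 0; 1; 3; 3; 2]);
(0, [:: 0; 0; 0; 0; 0; 0; 0; 0; 1; 0; 0; 0; 0; 0; 0], [:: 0; 1; 5; 1; 2; 3; 1; 1; 3; 0; 0; 1; 2; 3; 3]);
(4, [:: 0; 0; 0; 0; 0; 0; 0; 0; 0; 0; 0; 0; 0; 0; 0], [:: 5; 5; 0; 1; 0; 0; 2; 2; 0; 1; 4; 2; 0; 1; 3]);
(12, [:: 0; 0; 0; 0; 0; 0; 0; 0; 0; 0; 1; 0; 0; 0; 0], [:: 0; 3; 5; 1; 2; 1; 1; 1; 3; 2; 0; 2; 0; 2; 3]);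
(12, [:: 0; 0; 0; 1; 0; 0; 0; 0; 0; 0; 0; 0; 0; 0; 0], [:: 1; 2; 4; 2; 3; 6; 0; 1; 1; 3; 1; 0; 0; 0; 2]);
(11, [:: 0; 0; 0; 0; 0; 0; 0; 0; 0; 0; 0; 0; 0; 0; 0], [:: 2; 1; 5; 0; 1; 3; 1; 0; 0; 5; 3; 0; 3; 1; 1]);
(5, [:: 0; 0; 1; 1; 1; 0; 0; 0; 0; 0; 0; 0; 0; 0; 0], [:: 3; 3; 0; 2; 3; 0; 4; 2; 1; 1; 4; 1; 2; 0; 0]);
(8, [:: 0; 1; 0; 0; 0; 0; 0; 0; 0; 0; 0; 0; 0; 0; 0], [:: 1; 0; 4; 2; 2; 0; 2; 1; 0; 5; 1; 2; 1; 3; 2]);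
(10, [:: 0; 0; 0; 0; 0; 0; 0; 0; 1; 0; 0; 0; 0; 0; 0], [:: 1; 4; 1; 4; 1; 2; 5; 3; 0; 1; 0; 0; 0; 1; 3]);
(9, [:: 0; 0; 0; 0; 0; 0; 0; 0; 0; 0; 0; 0; 0; 1; 0], [:: 2; 5; 2; 0; 2; 4; 1; 1; 3; 0; 4; 0; 1; 1; 0]);
(8, [:: 0; 0; 0; 0; 0; 0; 0; 0; 0; 0; 0; 1; 0; 1; 0], [:: 2; 4; 3; 4; 0; 0; 1; 2; 0; 3; 4; 1; 1; 1; 0]);
(13, [:: 0; 0; 0; 0; 0; 0; 0; 0; 0; 0; 0; 0; 0; 0; 0], [:: 4; 1; 3; 2; 0; 2; 0; 4; 0; 0; 2; 2; 4; 0; 2]);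
(14, [:: 0; 0; 0; 1; 1; 0; 0; 0; 0; 0; 0; 0; 0; 0; 0], [:: 3; 6; 2; 2; 2; 0; 1; 0; 2; 4; 0; 1; 2; 1; 0]);
(8, [:: 0; 0; 0; 0; 0; 0; 0; 0; 0; 1; 0; 1; 0; 0; 0], [:: 3; 2; 1; 0; 0; 3; 2; 1; 0; 3; 4; 1; 1; 2; 3]);
(7, [:: 0; 0; 0; 0; 0; 0; 0; 0; 0; 0; 0; 0; 1; 1; 0], [:: 2; 1; 1; 1; 3; 4; 4; 0; 0; 4; 2; 0; 1; 0; 3]);
(2, [:: 0; 0; 0; 0; 0; 0; 1; 0; 0; 0; 0; 0; 0; 0; 0], [:: 2; 1; 0; 3; 0; 5; 1; 4; 1; 0; 1; 2; 1; 3; 2]);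
(14, [:: 0; 0; 0; 0; 0; 0; 0; 0; 0; 0; 0; 0; 0; 0; 0], [:: 5; 1; 0; 1; 3; 4; 0; 4; 2; 1; 0; 2; 0; 3; 0]);
(8, [:: 0; 0; 0; 0; 0; 0; 0; 0; 0; 1; 0; 0; 0; 0; 0], [:: 1; 2; 4; 1; 3; 6; 1; 0; 0; 2; 1; 1; 2; 0; 2]);
(2, [:: 0; 0; 0; 0; 0; 0; 0; 0; 1; 0; 0; 0; 0; 0; 0], [:: 1; 0; 0; 4; 2; 3; 5; 3; 0; 2; 2; 2; 0; 1; 1]);
(4, [:: 0; 0; 0; 0; 0; 0; 0; 0; 0; 0; 0; 1; 0; 0; 0], [:: 1; 0; 5; 2; 0; 0; 2; 1; 3; 2; 4; 0; 3; 2; 1]);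
(10, [:: 0; 0; 0; 0; 0; 0; 0; 0; 0; 0; 0; 0; 1; 0; 0], [:: 1; 0; 3; 0; 2; 1; 1; 4; 2; 2; 0; 2; 3; 3; 2]);
(13, [:: 1; 0; 0; 0; 0; 0; 0; 0; 0; 0; 0; 0; 0; 0; 0], [:: 0; 2; 2; 2; 3; 2; 0; 4; 1; 1; 1; 2; 3; 0; 3]);
(1, [:: 0; 0; 0; 0; 0; 0; 0; 0; 1; 0; 0; 1; 0; 0; 0], [:: 0; 0; 2; 1; 3; 4; 2; 3; 3; 1; 2; 0; 1; 2; 2]);
(14, [:: 0; 0; 0; 0; 0; 0; 0; 0; 1; 0; 0; 0; 0; 0; 0], [:: 1; 4; 5; 1; 1; 3; 2; 1; 0; 2; 1; 2; 0; 3; 0]);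
(6, [:: 0; 0; 1; 0; 0; 0; 0; 0; 0; 0; 0; 1; 0; 0; 0], [:: 2; 2; 4; 2; 3; 2; 0; 3; 0; 1; 1; 0; 4; 0; 2]);
(5, [:: 0; 0; 0; 0; 1; 0; 0; 0; 0; 0; 0; 0; 0; 0; 0], [:: 3; 1; 1; 2; 3; 0; 3; 4; 1; 1; 2; 0; 2; 3; 0]);
(5, [:: 0; 0; 0; 0; 1; 0; 0; 0; 0; 0; 0; 0; 0; 0; 0], [:: 1; 3; 4; 1; 3; 0; 0; 2; 1; 0; 1; 2; 2; 3; 3]);
(1, [:: 0; 0; 0; 0; 0; 0; 0; 0; 1; 0; 0; 1; 0; 0; 0], [:: 6; 0; 2; 3; 1; 4; 1; 2; 0; 2; 2; 0; 0; 0; 3]);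
(14, [:: 0; 0; 0; 0; 0; 0; 0; 1; 0; 0; 0; 1; 0; 0; 0], [:: 1; 1; 2; 4; 2; 4; 5; 1; 1; 2; 2; 1; 0; 0; 0]);
(5, [:: 0; 0; 0; 0; 0; 0; 0; 0; 0; 0; 0; 0; 0; 1; 0], [:: 5; 1; 4; 0; 2; 0; 2; 0; 1; 2; 2; 3; 1; 3; 0]);
(9, [:: 0; 0; 0; 0; 1; 0; 0; 0; 0; 0; 0; 0; 0; 0; 0], [:: 2; 1; 1; 4; 2; 3; 4; 0; 1; 0; 1; 3; 0; 3; 1]);
(3, [:: 0; 0; 0; 0; 0; 0; 0; 1; 0; 0; 0; 0; 0; 0; 0], [:: 1; 0; 5; 0; 2; 2; 1; 2; 2; 1; 4; 1; 3; 2; 0]);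
(8, [:: 0; 0; 0; 0; 0; 0; 0; 0; 0; 0; 0; 0; 0; 0; 1], [:: 4; 2; 0; 1; 1; 2; 2; 0; 0; 3; 2; 1; 3; 3; 2]);
(8, [:: 0; 0; 1; 0; 0; 0; 0; 0; 0; 0; 0; 0; 0; 0; 0], [:: 2; 2; 2; 3; 3; 0; 2; 1; 0; 5; 3; 1; 1; 0; 1]);
(11, [:: 0; 0; 0; 0; 0; 0; 0; 0; 0; 0; 0; 0; 0; 1; 0], [:: 2; 1; 4; 4; 0; 0; 5; 0; 1; 1; 3; 0; 4; 0; 1]);
(11, [:: 0; 0; 0; 1; 0; 0; 0; 0; 1; 0; 0; 0; 0; 0; 0], [:: 1; 1; 2; 3; 2; 2; 2; 1; 3; 0; 3; 0; 3; 3; 0]);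
(1, [:: 0; 0; 0; 0; 0; 0; 0; 0; 1; 0; 0; 0; 0; 0; 0], [:: 7; 0; 0; 2; 1; 1; 5; 1; 1; 2; 0; 1; 2; 2; 1]);
(2, [:: 0; 0; 0; 0; 0; 0; 0; 0; 0; 0; 1; 0; 0; 1; 0], [:: 1; 3; 0; 2; 0; 1; 5; 0; 2; 4; 2; 1; 4; 0; 1]);
(13, [:: 0; 0; 0; 0; 0; 0; 0; 0; 0; 1; 0; 0; 0; 0; 0], [:: 4; 3; 0; 2; 0; 5; 0; 0; 2; 0; 4; 1; 4; 0; 1]);
(8, [:: 0; 0; 0; 0; 0; 0; 0; 0; 0; 0; 0; 0; 0; 0; 1], [:: 5; 5; 1; 0; 2; 1; 2; 0; 0; 2; 1; 3; 1; 3; 0]);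
(8, [:: 0; 0; 0; 0; 0; 0; 0; 0; 0; 0; 0; 0; 1; 0; 0], [:: 7; 1; 1; 0; 2; 2; 0; 2; 0; 4; 2; 2; 1; 1; 1]);
(0, [:: 0; 0; 0; 0; 0; 0; 0; 0; 0; 0; 1; 1; 0; 0; 0], [:: 0; 2; 3; 0; 1; 0; 5; 3; 1; 5; 1; 0; 2; 2; 1]);
(11, [:: 0; 0; 0; 0; 0; 0; 0; 0; 0; 0; 0; 0; 0; 1; 0], [:: 0; 5; 0; 2; 1; 1; 3; 3; 3; 1; 1; 0; 4; 0; 2]);
(8, [:: 0; 0; 0; 0; 0; 0; 0; 0; 0; 0; 0; 0; 0; 0; 1], [:: 5; 1; 2; 1; 1; 1; 0; 3; 0; 1; 0; 3; 2; 3; 3]);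
(13, [:: 0; 0; 0; 0; 0; 0; 0; 0; 0; 0; 0; 0; 0; 0; 1], [:: 2; 1; 1; 0; 3; 2; 0; 1; 3; 2; 3; 3; 4; 0; 1]);
(8, [:: 0; 0; 0; 0; 0; 0; 0; 0; 0; 0; 0; 0; 0; 1; 0], [:: 2; 3; 0; 1; 1; 4; 5; 0; 0; 1; 2; 3; 4; 0; 0]);
(0, [:: 0; 0; 0; 0; 0; 0; 0; 0; 0; 0; 0; 2; 0; 0; 0], [:: 0; 1; 4; 2; 0; 5; 1; 2; 3; 2; 4; 0; 1; 0; 1]);
(14, [:: 0; 0; 1; 0; 0; 0; 0; 0; 0; 0; 0; 0; 0; 0; 0], [:: 1; 3; 0; 1; 3; 2; 3; 4; 1; 0; 0; 2; 3; 3; 0]);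
(10, [:: 0; 0; 0; 0; 1; 0; 0; 0; 0; 0; 0; 0; 0; 0; 0], [:: 1; 2; 3; 4; 2; 2; 1; 1; 0; 2; 0; 2; 4; 0; 2]);
(5, [:: 0; 0; 0; 0; 1; 0; 0; 0; 0; 0; 0; 0; 0; 0; 0], [:: 1; 4; 2; 2; 3; 0; 3; 1; 3; 2; 1; 0; 0; 1; 3]);
(13, [:: 0; 0; 0; 0; 0; 0; 0; 0; 0; 0; 0; 0; 0; 0; 2], [:: 2; 3; 0; 0; 3; 6; 4; 1; 1; 3; 0; 0; 3; 0; 0]);
(11, [:: 0; 0; 0; 0; 0; 0; 0; 0; 0; 0; 0; 0; 1; 0; 1], [:: 2; 2; 0; 1; 3; 3; 1; 1; 0; 3; 4; 0; 2; 1; 3]);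
(4, [:: 0; 0; 0; 0; 0; 0; 0; 0; 0; 0; 0; 0; 1; 0; 0], [:: 1; 5; 0; 2; 0; 3; 1; 4; 2; 1; 0; 2; 0; 3; 2]);
(2, [:: 0; 0; 0; 0; 0; 0; 0; 0; 0; 0; 0; 0; 1; 0; 0], [:: 2; 1; 0; 0; 3; 3; 2; 1; 1; 2; 4; 0; 4; 1; 2]);
(4, [:: 0; 0; 0; 0; 0; 0; 0; 0; 0; 1; 0; 0; 0; 0; 1], [:: 2; 0; 4; 2; 0; 4; 0; 3; 3; 0; 2; 1; 2; 1; 2]);
(13, [:: 0; 0; 0; 0; 0; 0; 0; 0; 2; 0; 0; 0; 0; 0; 0], [:: 4; 1; 0; 2; 2; 2; 2; 3; 0; 3; 0; 1; 4; 0; 2]);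
(3, [:: 0; 0; 0; 0; 0; 0; 0; 1; 0; 0; 0; 1; 0; 0; 0], [:: 1; 2; 4; 0; 0; 3; 1; 0; 2; 1; 3; 3; 4; 0; 2]);
(0, [:: 0; 0; 0; 0; 0; 0; 0; 1; 1; 0; 0; 0; 0; 0; 0], [:: 0; 0; 1; 2; 3; 4; 2; 1; 3; 5; 0; 2; 1; 1; 1]);
(6, [:: 0; 0; 0; 1; 1; 0; 0; 0; 0; 0; 0; 0; 0; 0; 0], [:: 2; 6; 2; 2; 0; 1; 0; 4; 2; 0; 0; 1; 1; 2; 3]);
(7, [:: 0; 0; 0; 1; 0; 0; 0; 0; 0; 0; 0; 0; 0; 0; 0], [:: 3; 4; 2; 4; 1; 2; 0; 0; 1; 1; 2; 1; 0; 3; 2]);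
(14, [:: 0; 0; 1; 0; 0; 0; 0; 1; 0; 0; 0; 0; 0; 0; 0], [:: 2; 1; 4; 1; 2; 1; 2; 2; 2; 3; 0; 3; 0; 3; 0]);
(10, [:: 1; 0; 0; 0; 0; 0; 0; 0; 0; 0; 0; 0; 0; 0; 0], [:: 0; 1; 2; 4; 2; 1; 5; 3; 0; 2; 0; 0; 4; 0; 2]);
(3, [:: 0; 0; 0; 0; 0; 0; 0; 0; 0; 0; 0; 0; 1; 1; 0], [:: 1; 6; 2; 0; 0; 3; 1; 0; 1; 2; 3; 2; 4; 0; 1]);
(0, [:: 0; 0; 0; 0; 0; 0; 0; 0; 0; 0; 1; 1; 0; 0; 0], [:: 0; 2; 1; 3; 3; 1; 1; 2; 0; 2; 3; 3; 4; 1; 0]);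
(10, [:: 0; 0; 0; 1; 0; 0; 0; 0; 0; 0; 0; 0; 0; 0; 0], [:: 7; 1; 2; 3; 1; 5; 3; 0; 1; 0; 0; 1; 1; 0; 1]);
(10, [:: 0; 0; 0; 0; 0; 0; 0; 0; 0; 0; 0; 0; 1; 0; 0], [:: 5; 0; 0; 4; 1; 1; 2; 3; 2; 1; 0; 1; 2; 1; 3]);
(7, [:: 0; 0; 0; 0; 0; 0; 0; 0; 0; 0; 0; 0; 1; 1; 0], [:: 4; 1; 0; 0; 3; 1; 1; 0; 3; 5; 3; 1; 1; 1; 2]);
(5, [:: 0; 0; 0; 0; 1; 0; 0; 0; 0; 0; 0; 0; 0; 0; 0], [:: 2; 5; 2; 3; 0; 0; 1; 1; 2; 3; 4; 2; 0; 0; 1]);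
(13, [:: 0; 0; 0; 0; 2; 0; 0; 0; 0; 0; 0; 0; 0; 0; 0], [:: 3; 2; 4; 2; 0; 5; 0; 2; 0; 2; 1; 0; 2; 0; 3]);
(4, [:: 0; 0; 0; 0; 0; 0; 1; 0; 0; 0; 0; 0; 0; 1; 0], [:: 0; 3; 5; 3; 0; 2; 2; 1; 1; 1; 4; 0; 4; 0; 0]);
(13, [:: 0; 0; 0; 1; 0; 0; 0; 0; 1; 0; 0; 0; 0; 0; 0], [:: 6; 2; 1; 0; 2; 1; 1; 2; 3; 0; 0; 3; 2; 0; 3]);
(12, [:: 0; 0; 0; 0; 0; 0; 0; 0; 0; 0; 1; 1; 0; 0; 0], [:: 1; 2; 5; 3; 1; 0; 1; 2; 0; 4; 3; 0; 0; 1; 3]);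
(13, [:: 0; 0; 0; 1; 0; 0; 0; 0; 0; 0; 0; 0; 0; 0; 0], [:: 6; 3; 1; 0; 3; 1; 3; 0; 1; 2; 4; 2; 0; 0; 0]);
(12, [:: 0; 0; 0; 0; 1; 0; 0; 0; 0; 0; 0; 0; 0; 0; 0], [:: 6; 2; 1; 1; 3; 1; 1; 1; 3; 3; 1; 3; 0; 0; 0]);
(9, [:: 0; 0; 0; 0; 0; 0; 0; 1; 1; 0; 0; 0; 0; 0; 0], [:: 1; 2; 3; 1; 3; 3; 2; 0; 3; 0; 4; 2; 0; 0; 2]);
(8, [:: 0; 0; 0; 0; 1; 0; 0; 0; 0; 0; 0; 0; 0; 0; 0], [:: 6; 1; 4; 2; 0; 1; 3; 0; 0; 5; 0; 0; 1; 2; 1]);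
(5, [:: 0; 0; 0; 0; 0; 0; 0; 0; 0; 0; 0; 0; 0; 1; 0], [:: 1; 5; 2; 1; 2; 0; 4; 4; 0; 0; 2; 0; 2; 0; 3]);
(10, [:: 0; 0; 0; 0; 0; 1; 0; 0; 0; 0; 0; 0; 0; 0; 0], [:: 3; 1; 1; 0; 3; 1; 2; 3; 1; 2; 0; 3; 3; 0; 3]);
(12, [:: 0; 0; 0; 0; 0; 0; 0; 0; 0; 0; 0; 0; 0; 0; 0], [:: 2; 1; 1; 3; 3; 1; 5; 0; 1; 5; 0; 2; 0; 2; 0]);
(0, [:: 0; 0; 0; 0; 0; 0; 0; 0; 1; 0; 0; 0; 0; 0; 0], [:: 0; 1; 2; 3; 0; 4; 3; 1; 3; 1; 2; 0; 2; 3; 1]);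
(11, [:: 0; 0; 0; 0; 0; 0; 0; 0; 0; 0; 0; 0; 0; 1; 1], [:: 7; 2; 1; 1; 0; 2; 3; 0; 1; 4; 3; 0; 2; 0; 0]);
(1, [:: 0; 0; 0; 0; 0; 0; 0; 1; 1; 0; 0; 0; 0; 0; 0], [:: 1; 0; 2; 4; 0; 2; 3; 0; 1; 0; 3; 3; 4; 1; 2]);
(14, [:: 0; 0; 0; 1; 1; 0; 0; 0; 0; 0; 0; 0; 0; 0; 0], [:: 3; 4; 3; 1; 0; 3; 0; 2; 3; 1; 3; 3; 0; 0; 0]);
(2, [:: 0; 0; 0; 0; 0; 0; 0; 0; 0; 0; 0; 0; 0; 0; 0], [:: 3; 1; 0; 2; 0; 2; 4; 1; 3; 2; 0; 1; 3; 1; 3]);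
(2, [:: 0; 0; 0; 0; 0; 0; 1; 0; 0; 0; 0; 0; 0; 0; 0], [:: 2; 2; 0; 1; 3; 5; 1; 1; 2; 0; 4; 0; 0; 2; 3]);
(11, [:: 0; 0; 0; 0; 0; 1; 0; 0; 0; 0; 0; 0; 0; 0; 0], [:: 4; 0; 0; 2; 1; 1; 3; 1; 1; 4; 4; 0; 2; 2; 1]);
(12, [:: 0; 0; 0; 0; 1; 0; 0; 0; 1; 0; 0; 0; 0; 0; 0], [:: 3; 6; 1; 2; 2; 6; 1; 1; 0; 0; 1; 2; 0; 0; 1]);
(1, [:: 0; 0; 0; 0; 0; 0; 0; 0; 0; 0; 0; 0; 1; 0; 1], [:: 7; 0; 2; 0; 1; 2; 2; 1; 2; 3; 1; 0; 2; 3; 0]);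
(14, [:: 0; 1; 0; 0; 0; 0; 0; 0; 0; 0; 0; 0; 0; 0; 0], [:: 6; 1; 1; 1; 2; 1; 3; 0; 1; 0; 4; 1; 3; 2; 0]);
(12, [:: 0; 0; 0; 1; 0; 0; 0; 0; 1; 0; 0; 0; 0; 0; 0], [:: 2; 3; 5; 0; 2; 1; 4; 1; 3; 3; 0; 1; 0; 1; 0]);
(8, [:: 0; 0; 0; 0; 0; 0; 0; 0; 0; 0; 0; 0; 0; 2; 0], [:: 1; 4; 3; 0; 0; 3; 2; 0; 0; 3; 4; 1; 4; 1; 0]);
(5, [:: 0; 0; 0; 0; 0; 0; 0; 0; 0; 0; 0; 1; 0; 1; 0], [:: 2; 1; 2; 0; 3; 0; 4; 4; 1; 1; 2; 2; 4; 0; 0]);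
(4, [:: 0; 0; 0; 0; 0; 0; 0; 0; 0; 0; 0; 1; 0; 0; 1], [:: 1; 5; 4; 0; 0; 6; 1; 3; 1; 2; 2; 0; 1; 0; 0]);
(0, [:: 0; 0; 0; 0; 0; 0; 0; 0; 0; 0; 0; 0; 0; 0; 0], [:: 0; 0; 3; 3; 1; 1; 5; 0; 2; 4; 1; 2; 1; 0; 3]);
(9, [:: 0; 0; 0; 0; 0; 0; 1; 1; 0; 0; 0; 0; 0; 0; 0], [:: 3; 4; 2; 0; 1; 2; 4; 2; 2; 0; 1; 1; 0; 3; 1]);
(3, [:: 0; 0; 0; 0; 0; 0; 0; 0; 0; 0; 0; 1; 0; 0; 0], [:: 7; 3; 1; 0; 0; 1; 2; 2; 0; 3; 3; 0; 3; 1; 0]);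
(12, [:: 0; 0; 0; 1; 0; 0; 0; 0; 1; 0; 0; 0; 0; 0; 0], [:: 1; 3; 2; 0; 1; 2; 3; 3; 1; 0; 3; 1; 0; 3; 3]);
(2, [:: 0; 0; 0; 0; 0; 0; 0; 0; 0; 0; 0; 0; 0; 0; 0], [:: 3; 0; 0; 2; 1; 2; 2; 3; 1; 1; 4; 2; 3; 2; 0]);
(5, [:: 0; 0; 0; 1; 0; 0; 0; 0; 0; 0; 0; 0; 0; 0; 0], [:: 2; 2; 3; 0; 1; 0; 3; 2; 1; 3; 3; 2; 0; 3; 1]);
(8, [:: 0; 0; 0; 0; 0; 0; 0; 0; 0; 0; 1; 0; 0; 0; 0], [:: 3; 1; 1; 0; 2; 2; 3; 0; 0; 5; 2; 1; 1; 3; 2]);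
(8, [:: 0; 0; 0; 0; 2; 0; 0; 0; 0; 0; 0; 0; 0; 0; 0], [:: 3; 2; 2; 3; 3; 1; 5; 0; 0; 1; 3; 1; 0; 0; 2]);
(8, [:: 0; 0; 1; 0; 0; 0; 0; 0; 0; 0; 0; 1; 0; 0; 0], [:: 2; 3; 1; 1; 3; 0; 5; 2; 0; 5; 2; 1; 0; 0; 1]);
(8, [:: 0; 0; 0; 0; 0; 0; 0; 0; 0; 0; 1; 1; 0; 1; 0], [:: 0; 2; 1; 0; 3; 2; 2; 4; 0; 2; 4; 1; 4; 1; 0]);
(6, [:: 0; 0; 0; 0; 0; 0; 0; 0; 0; 0; 0; 0; 0; 0; 1], [:: 4; 3; 0; 0; 3; 1; 0; 4; 1; 5; 0; 0; 2; 3; 0]);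
(6, [:: 0; 0; 0; 0; 0; 0; 0; 0; 0; 0; 0; 0; 1; 0; 0], [:: 5; 1; 1; 4; 2; 2; 0; 0; 1; 1; 3; 3; 0; 1; 2]);
(3, [:: 0; 0; 0; 0; 0; 0; 0; 0; 0; 0; 0; 0; 1; 0; 0], [:: 3; 1; 2; 0; 0; 6; 2; 1; 1; 2; 3; 0; 3; 1; 1]);
(14, [:: 0; 0; 0; 0; 1; 0; 0; 0; 0; 0; 0; 0; 0; 0; 0], [:: 2; 4; 2; 2; 3; 0; 0; 1; 2; 1; 1; 2; 3; 3; 0]);
(13, [:: 0; 0; 0; 0; 0; 0; 0; 1; 0; 0; 0; 0; 0; 0; 0], [:: 7; 3; 4; 0; 1; 4; 1; 0; 1; 1; 0; 1; 1; 0; 2]);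
(5, [:: 0; 0; 0; 0; 1; 0; 0; 0; 0; 0; 0; 0; 0; 0; 0], [:: 2; 3; 4; 2; 2; 0; 3; 0; 1; 1; 0; 3; 4; 1; 0]);
(8, [:: 0; 0; 0; 0; 0; 0; 0; 0; 0; 0; 1; 0; 0; 1; 0], [:: 0; 5; 1; 2; 3; 0; 2; 1; 0; 3; 0; 3; 4; 1; 1]);
(7, [:: 0; 0; 0; 1; 1; 0; 0; 0; 0; 0; 0; 0; 0; 0; 0], [:: 4; 2; 5; 0; 2; 2; 0; 0; 2; 0; 2; 0; 1; 3; 3]);
(11, [:: 0; 0; 0; 0; 0; 0; 0; 0; 1; 0; 0; 0; 0; 0; 0], [:: 0; 2; 3; 1; 3; 5; 2; 4; 1; 1; 0; 0; 2; 0; 2]);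
(8, [:: 0; 0; 0; 0; 0; 0; 0; 0; 0; 0; 0; 0; 1; 1; 0], [:: 1; 6; 0; 2; 2; 2; 1; 0; 0; 2; 1; 3; 3; 2; 1]);
(12, [:: 0; 0; 0; 0; 0; 0; 0; 0; 0; 0; 1; 0; 0; 0; 0], [:: 2; 5; 0; 2; 1; 3; 5; 1; 2; 1; 0; 3; 0; 1; 0]);
(8, [:: 0; 0; 0; 0; 0; 0; 0; 0; 0; 1; 0; 0; 0; 0; 0], [:: 2; 1; 3; 0; 0; 3; 5; 1; 0; 0; 1; 3; 3; 1; 3]);
(4, [:: 0; 0; 0; 0; 0; 0; 0; 0; 0; 0; 0; 1; 0; 0; 0], [:: 1; 0; 3; 2; 0; 2; 5; 3; 0; 4; 1; 0; 0; 2; 3]);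
(4, [:: 0; 0; 0; 0; 0; 0; 0; 0; 0; 0; 0; 0; 1; 0; 0], [:: 5; 0; 3; 4; 0; 1; 0; 2; 0; 3; 1; 3; 0; 3; 1]);
(13, [:: 0; 0; 1; 0; 0; 0; 0; 0; 0; 0; 0; 0; 0; 0; 0], [:: 1; 1; 0; 3; 2; 2; 0; 1; 3; 4; 2; 3; 2; 0; 2]);
(0, [:: 0; 0; 0; 0; 0; 0; 0; 0; 1; 0; 0; 0; 0; 1; 0], [:: 0; 1; 5; 2; 2; 3; 5; 2; 0; 2; 3; 0; 1; 0; 0]);
(5, [:: 0; 0; 1; 0; 0; 0; 0; 0; 0; 0; 0; 1; 0; 0; 0], [:: 2; 5; 5; 1; 1; 0; 0; 2; 1; 5; 2; 0; 0; 1; 1]);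
(10, [:: 0; 0; 1; 1; 0; 0; 0; 0; 0; 0; 0; 0; 0; 0; 0], [:: 5; 2; 4; 0; 2; 4; 0; 4; 1; 0; 0; 1; 0; 2; 1]);
(5, [:: 0; 0; 1; 0; 1; 0; 0; 0; 0; 0; 0; 0; 0; 0; 0], [:: 2; 2; 3; 2; 1; 0; 0; 4; 2; 5; 1; 1; 0; 1; 2]);
(13, [:: 0; 0; 0; 0; 0; 0; 0; 0; 0; 1; 0; 1; 0; 0; 0], [:: 2; 1; 1; 0; 3; 1; 0; 4; 2; 5; 3; 0; 2; 0; 2]);
(14, [:: 0; 0; 0; 0; 0; 0; 0; 1; 0; 0; 0; 0; 0; 0; 0], [:: 0; 3; 2; 4; 1; 2; 2; 0; 1; 1; 4; 1; 3; 2; 0]);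
(11, [:: 0; 0; 0; 0; 1; 0; 0; 0; 0; 0; 0; 0; 0; 1; 0], [:: 2; 2; 3; 3; 3; 0; 2; 0; 1; 1; 4; 0; 1; 1; 3]);
(8, [:: 0; 0; 0; 0; 0; 0; 0; 0; 0; 0; 0; 0; 0; 0; 0], [:: 3; 2; 3; 4; 2; 3; 0; 1; 0; 3; 0; 1; 0; 1; 3]);
(8, [:: 0; 0; 0; 0; 0; 0; 0; 0; 0; 0; 0; 0; 1; 0; 1], [:: 2; 0; 1; 3; 3; 2; 0; 4; 0; 5; 2; 1; 0; 1; 2]);
(4, [:: 0; 0; 0; 0; 0; 0; 0; 0; 0; 0; 0; 1; 0; 0; 0], [:: 3; 0; 1; 2; 0; 1; 3; 4; 1; 5; 1; 0; 2; 3; 0]);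
(8, [:: 0; 0; 0; 0; 0; 0; 0; 0; 0; 0; 0; 0; 0; 0; 1], [:: 6; 1; 5; 2; 0; 1; 0; 2; 0; 2; 0; 2; 1; 2; 2]);
(2, [:: 0; 0; 0; 0; 0; 1; 0; 0; 0; 0; 0; 0; 0; 0; 0], [:: 1; 5; 0; 3; 0; 3; 1; 1; 3; 1; 2; 0; 4; 1; 1]);
(11, [:: 0; 0; 0; 0; 0; 0; 0; 0; 0; 0; 0; 0; 0; 0; 2], [:: 3; 0; 1; 1; 2; 2; 4; 0; 3; 3; 2; 0; 4; 1; 0]);
(11, [:: 0; 0; 0; 0; 2; 0; 0; 0; 0; 0; 0; 0; 0; 0; 0], [:: 2; 3; 3; 4; 0; 2; 0; 0; 1; 2; 3; 0; 0; 3; 3]);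
(8, [:: 0; 0; 0; 0; 0; 0; 0; 0; 0; 0; 0; 0; 1; 1; 0], [:: 2; 3; 1; 0; 0; 1; 4; 4; 0; 3; 3; 0; 1; 1; 3]);
(11, [:: 1; 0; 0; 0; 0; 0; 0; 0; 0; 0; 0; 0; 0; 0; 0], [:: 2; 1; 5; 1; 2; 6; 2; 0; 0; 1; 0; 0; 2; 3; 1]);
(11, [:: 0; 0; 0; 0; 0; 0; 0; 0; 1; 0; 0; 0; 0; 0; 1], [:: 1; 4; 0; 4; 0; 2; 1; 1; 2; 4; 4; 0; 2; 1; 0]);
(0, [:: 0; 0; 0; 0; 0; 0; 0; 0; 1; 0; 0; 0; 0; 1; 0], [:: 0; 6; 2; 1; 0; 5; 2; 1; 2; 0; 1; 1; 4; 0; 1]);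
(3, [:: 0; 0; 0; 0; 0; 0; 0; 1; 0; 0; 0; 1; 0; 0; 0], [:: 4; 1; 5; 0; 0; 2; 4; 1; 3; 1; 1; 0; 1; 0; 3]);
(13, [:: 0; 0; 0; 1; 0; 0; 0; 0; 1; 0; 0; 0; 0; 0; 0], [:: 3; 1; 1; 3; 3; 1; 1; 3; 1; 4; 4; 1; 0; 0; 0]);
(4, [:: 0; 0; 0; 0; 0; 0; 0; 0; 1; 0; 0; 0; 0; 0; 0], [:: 2; 1; 0; 4; 0; 1; 3; 3; 2; 5; 1; 0; 0; 2; 2]);
(0, [:: 0; 0; 0; 0; 0; 0; 0; 0; 0; 0; 0; 1; 0; 0; 0], [:: 0; 3; 1; 2; 0; 1; 4; 1; 3; 2; 2; 3; 1; 0; 3]);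
(8, [:: 0; 0; 0; 0; 0; 0; 0; 0; 0; 0; 0; 0; 0; 0; 0], [:: 0; 4; 4; 0; 1; 2; 0; 2; 0; 4; 3; 1; 2; 0; 3]);
(11, [:: 0; 0; 0; 0; 0; 0; 1; 0; 0; 0; 0; 0; 0; 0; 0], [:: 0; 5; 0; 2; 1; 5; 2; 1; 1; 2; 1; 0; 0; 3; 3]);
(7, [:: 0; 0; 0; 0; 0; 0; 0; 0; 0; 0; 1; 0; 0; 0; 0], [:: 4; 3; 0; 4; 0; 2; 1; 0; 0; 3; 4; 2; 1; 2; 0]);
(14, [:: 0; 0; 0; 0; 0; 0; 0; 0; 0; 0; 0; 2; 0; 0; 0], [:: 1; 6; 2; 3; 1; 0; 1; 2; 0; 2; 2; 1; 4; 1; 0]);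
(12, [:: 0; 0; 0; 0; 0; 0; 0; 0; 1; 0; 0; 1; 0; 0; 0], [:: 2; 3; 3; 1; 0; 4; 1; 2; 3; 1; 4; 2; 0; 0; 0]);
(3, [:: 0; 0; 0; 0; 0; 0; 0; 0; 0; 0; 0; 0; 0; 0; 1], [:: 1; 0; 3; 0; 3; 5; 2; 0; 0; 5; 1; 2; 1; 3; 0]);
(8, [:: 0; 0; 0; 0; 1; 0; 0; 0; 0; 0; 0; 1; 0; 0; 0], [:: 1; 1; 2; 2; 3; 0; 1; 3; 0; 2; 4; 2; 2; 0; 3]);
(11, [:: 0; 0; 0; 0; 0; 0; 0; 0; 0; 0; 0; 0; 1; 0; 0], [:: 3; 0; 1; 2; 1; 3; 1; 4; 2; 2; 0; 0; 3; 3; 1]);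
(13, [:: 0; 0; 0; 0; 1; 0; 0; 0; 0; 0; 0; 0; 0; 0; 1], [:: 3; 3; 5; 2; 0; 1; 4; 3; 1; 1; 0; 0; 3; 0; 0]);
(3, [:: 0; 0; 0; 0; 0; 0; 0; 0; 0; 0; 0; 0; 0; 1; 1], [:: 2; 1; 0; 0; 3; 3; 1; 3; 2; 1; 2; 3; 4; 0; 1]);
(2, [:: 0; 0; 0; 0; 0; 0; 0; 0; 0; 0; 0; 0; 1; 1; 0], [:: 1; 2; 0; 0; 3; 5; 2; 2; 3; 1; 1; 2; 3; 0; 1]);
(0, [:: 0; 0; 0; 0; 0; 0; 1; 0; 0; 0; 0; 0; 0; 0; 0], [:: 0; 3; 3; 0; 1; 1; 4; 1; 1; 4; 2; 3; 0; 1; 2]);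
(11, [:: 0; 1; 0; 0; 0; 0; 0; 0; 0; 0; 0; 0; 0; 0; 0], [:: 1; 4; 3; 1; 3; 6; 1; 3; 0; 0; 1; 0; 0; 1; 2]);
(11, [:: 0; 1; 0; 0; 0; 0; 0; 0; 0; 0; 0; 0; 0; 1; 0], [:: 1; 3; 2; 1; 2; 1; 2; 0; 3; 0; 3; 0; 2; 3; 3]);
(8, [:: 0; 0; 0; 0; 1; 0; 0; 0; 0; 0; 0; 0; 0; 0; 1], [:: 2; 4; 1; 1; 2; 1; 0; 2; 0; 3; 3; 0; 3; 3; 1]);
(8, [:: 0; 0; 0; 0; 0; 0; 0; 0; 0; 0; 0; 0; 0; 0; 0], [:: 5; 6; 1; 1; 1; 6; 2; 0; 0; 1; 0; 0; 1; 1; 1]);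
(14, [:: 0; 0; 0; 0; 0; 0; 0; 0; 0; 0; 1; 0; 0; 0; 0], [:: 1; 6; 3; 1; 0; 0; 1; 0; 3; 5; 2; 1; 2; 1; 0]);
(8, [:: 0; 0; 1; 0; 0; 0; 0; 0; 0; 0; 0; 0; 0; 0; 0], [:: 1; 6; 1; 3; 1; 2; 0; 1; 0; 3; 0; 3; 1; 1; 3]);
(8, [:: 0; 1; 0; 0; 1; 0; 0; 0; 0; 0; 0; 0; 0; 0; 0], [:: 2; 1; 4; 2; 3; 1; 5; 0; 0; 2; 1; 0; 3; 2; 0]);
(8, [:: 0; 0; 0; 0; 0; 0; 0; 0; 0; 1; 0; 0; 0; 0; 1], [:: 5; 1; 2; 3; 3; 2; 0; 1; 0; 1; 4; 1; 3; 0; 0]);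
(14, [:: 0; 0; 0; 0; 0; 0; 0; 1; 1; 0; 0; 0; 0; 0; 0], [:: 1; 4; 1; 1; 3; 2; 2; 2; 0; 5; 1; 1; 0; 3; 0]);
(11, [:: 0; 0; 0; 0; 1; 0; 0; 0; 0; 0; 0; 0; 0; 1; 0], [:: 5; 6; 1; 1; 0; 4; 1; 1; 2; 0; 1; 0; 4; 0; 0]);
(4, [:: 0; 0; 0; 0; 0; 0; 0; 0; 2; 0; 0; 0; 0; 0; 0], [:: 3; 0; 3; 3; 0; 3; 2; 2; 0; 5; 0; 0; 3; 1; 1]);
(0, [:: 0; 0; 0; 0; 0; 0; 1; 0; 1; 0; 0; 0; 0; 0; 0], [:: 0; 2; 1; 4; 0; 3; 2; 3; 2; 0; 2; 1; 2; 1; 3]);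
(4, [:: 0; 0; 0; 0; 0; 0; 0; 0; 0; 0; 0; 0; 1; 0; 0], [:: 7; 1; 2; 0; 0; 1; 2; 0; 3; 1; 0; 3; 3; 2; 1]);
(2, [:: 0; 0; 0; 0; 0; 0; 0; 0; 1; 0; 0; 0; 0; 1; 0], [:: 2; 6; 0; 1; 0; 2; 2; 1; 2; 1; 1; 3; 4; 1; 0]);
(9, [:: 0; 0; 0; 0; 0; 0; 0; 1; 0; 0; 0; 0; 0; 0; 0], [:: 3; 1; 1; 4; 2; 4; 5; 0; 1; 0; 0; 3; 1; 1; 0]);
(4, [:: 0; 0; 0; 0; 0; 0; 0; 0; 1; 0; 1; 0; 0; 0; 0], [:: 1; 6; 0; 3; 0; 2; 2; 4; 0; 1; 0; 2; 4; 1; 0]);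
(8, [:: 0; 0; 0; 0; 0; 0; 0; 0; 0; 0; 1; 1; 0; 0; 0], [:: 1; 4; 3; 0; 0; 1; 1; 4; 0; 4; 0; 2; 2; 3; 1]);
(4, [:: 0; 0; 0; 0; 0; 0; 0; 0; 0; 0; 0; 0; 0; 0; 1], [:: 4; 0; 1; 2; 0; 1; 2; 1; 3; 5; 1; 0; 1; 3; 2]);
(14, [:: 0; 0; 0; 0; 1; 0; 0; 0; 0; 0; 0; 1; 0; 0; 0], [:: 2; 2; 3; 3; 0; 6; 1; 2; 2; 1; 1; 0; 0; 3; 0]);
(10, [:: 0; 0; 0; 0; 0; 1; 0; 0; 1; 0; 0; 0; 0; 0; 0], [:: 7; 2; 3; 2; 0; 0; 3; 4; 0; 1; 0; 0; 2; 1; 1]);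
(14, [:: 0; 0; 0; 1; 0; 0; 0; 0; 0; 0; 0; 0; 0; 0; 0], [:: 6; 3; 1; 3; 1; 4; 1; 0; 3; 0; 0; 2; 1; 1; 0]);
(0, [:: 0; 0; 0; 0; 0; 0; 0; 1; 1; 0; 0; 0; 0; 0; 0], [:: 0; 1; 2; 3; 0; 2; 3; 3; 3; 2; 1; 2; 4; 0; 0]);
(13, [:: 0; 0; 0; 0; 0; 0; 0; 0; 0; 0; 0; 0; 0; 0; 2], [:: 2; 1; 0; 1; 3; 4; 5; 1; 2; 2; 0; 1; 2; 0; 2]);
(1, [:: 0; 0; 0; 0; 0; 0; 0; 1; 0; 0; 0; 1; 0; 0; 0], [:: 1; 0; 5; 2; 0; 6; 1; 1; 2; 4; 2; 0; 0; 1; 1]);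
(4, [:: 0; 0; 0; 0; 0; 0; 1; 0; 0; 0; 1; 0; 0; 0; 0], [:: 3; 2; 1; 0; 0; 1; 3; 1; 2; 3; 4; 1; 0; 2; 3]);
(8, [:: 0; 0; 0; 0; 0; 0; 0; 0; 0; 0; 1; 1; 0; 0; 0], [:: 1; 2; 1; 1; 3; 0; 5; 2; 0; 3; 0; 3; 0; 2; 3]);
(11, [:: 0; 0; 0; 0; 0; 0; 0; 0; 2; 0; 0; 0; 0; 0; 0], [:: 4; 1; 0; 2; 0; 2; 3; 2; 3; 4; 4; 0; 0; 0; 1]);
(13, [:: 0; 0; 0; 0; 0; 0; 0; 1; 0; 0; 0; 0; 0; 0; 0], [:: 0; 1; 5; 1; 2; 4; 1; 0; 2; 4; 2; 1; 0; 0; 3]);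
(4, [:: 0; 0; 0; 0; 0; 0; 0; 0; 0; 1; 0; 0; 1; 0; 0], [:: 2; 1; 0; 3; 0; 5; 1; 2; 3; 1; 4; 1; 0; 1; 2]);
(14, [:: 0; 0; 1; 0; 1; 0; 0; 0; 0; 0; 0; 0; 0; 0; 0], [:: 5; 3; 0; 4; 0; 6; 0; 1; 0; 0; 4; 2; 1; 0; 0]);
(8, [:: 0; 0; 0; 0; 1; 0; 0; 0; 0; 0; 0; 0; 0; 1; 0], [:: 6; 3; 1; 4; 0; 2; 1; 0; 0; 2; 4; 1; 1; 0; 1]);
(11, [:: 0; 0; 0; 0; 0; 0; 0; 0; 0; 0; 0; 0; 0; 0; 1], [:: 2; 0; 5; 0; 2; 4; 3; 0; 2; 1; 0; 0; 4; 1; 2]);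
(4, [:: 0; 0; 0; 0; 0; 0; 0; 0; 0; 0; 0; 1; 0; 0; 1], [:: 2; 0; 3; 4; 0; 2; 0; 1; 0; 4; 1; 3; 3; 2; 1]);
(11, [:: 0; 0; 0; 0; 1; 0; 0; 0; 0; 0; 0; 0; 0; 0; 0], [:: 6; 4; 1; 1; 0; 1; 5; 0; 1; 1; 2; 0; 1; 0; 3]);
(11, [:: 0; 0; 0; 1; 1; 0; 0; 0; 0; 0; 0; 0; 0; 0; 0], [:: 2; 2; 2; 4; 2; 6; 1; 0; 1; 1; 0; 0; 2; 1; 2]);
(14, [:: 0; 0; 0; 0; 0; 0; 1; 0; 1; 0; 0; 0; 0; 0; 0], [:: 1; 3; 3; 1; 3; 3; 0; 3; 3; 2; 1; 1; 0; 2; 0]);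
(8, [:: 0; 0; 0; 0; 0; 0; 0; 0; 0; 0; 0; 0; 1; 0; 1], [:: 2; 1; 1; 0; 3; 4; 5; 0; 0; 5; 1; 2; 1; 1; 0]);
(11, [:: 0; 0; 0; 1; 0; 0; 0; 0; 0; 0; 0; 0; 0; 0; 0], [:: 3; 1; 2; 3; 3; 2; 2; 4; 1; 0; 4; 0; 1; 0; 0]);
(8, [:: 0; 0; 0; 0; 1; 0; 0; 0; 0; 0; 1; 0; 0; 0; 0], [:: 5; 2; 5; 1; 1; 0; 3; 2; 0; 1; 0; 1; 4; 1; 0]);
(4, [:: 0; 0; 0; 0; 0; 0; 0; 0; 0; 0; 0; 0; 0; 0; 1], [:: 7; 3; 0; 2; 0; 2; 4; 4; 0; 1; 0; 0; 1; 0; 2]);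
(14, [:: 0; 0; 0; 0; 0; 0; 0; 0; 0; 0; 1; 0; 0; 1; 0], [:: 2; 2; 3; 0; 1; 0; 3; 1; 3; 1; 3; 3; 4; 0; 0]);
(11, [:: 0; 0; 0; 1; 0; 0; 0; 0; 0; 0; 0; 0; 0; 0; 1], [:: 4; 5; 1; 0; 2; 1; 2; 0; 3; 1; 0; 0; 1; 3; 3]);
(4, [:: 0; 0; 0; 0; 0; 0; 0; 0; 0; 0; 0; 2; 0; 0; 0], [:: 2; 0; 2; 4; 0; 6; 0; 3; 0; 3; 2; 0; 3; 1; 0]);
(4, [:: 0; 0; 0; 0; 0; 0; 0; 0; 0; 1; 0; 0; 0; 0; 0], [:: 3; 6; 1; 0; 0; 6; 0; 0; 2; 0; 2; 1; 1; 2; 2]);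
(8, [:: 0; 0; 0; 0; 0; 0; 0; 0; 0; 0; 0; 1; 0; 0; 1], [:: 1; 4; 2; 0; 3; 6; 0; 1; 0; 4; 1; 0; 1; 3; 0]);
(8, [:: 0; 0; 0; 0; 1; 0; 0; 0; 0; 0; 0; 0; 0; 0; 0], [:: 6; 3; 1; 3; 1; 1; 0; 3; 0; 5; 1; 0; 1; 0; 1]);
(0, [:: 0; 0; 0; 0; 0; 0; 0; 1; 0; 0; 0; 0; 0; 1; 0], [:: 0; 2; 1; 3; 0; 1; 4; 0; 2; 5; 1; 1; 1; 3; 2]);
(4, [:: 0; 0; 0; 0; 0; 0; 0; 1; 1; 0; 0; 1; 0; 0; 0], [:: 0; 4; 2; 2; 0; 2; 5; 2; 0; 1; 2; 3; 0; 0; 3]);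
(8, [:: 0; 0; 1; 0; 1; 0; 0; 0; 0; 0; 0; 0; 0; 0; 0], [:: 6; 2; 0; 4; 0; 0; 5; 1; 0; 0; 0; 3; 2; 2; 1]);
(4, [:: 0; 0; 0; 0; 0; 0; 0; 0; 0; 0; 0; 1; 0; 1; 0], [:: 0; 1; 5; 3; 0; 6; 1; 2; 0; 1; 4; 0; 1; 0; 2]);
(3, [:: 0; 0; 0; 0; 0; 0; 0; 0; 0; 0; 1; 0; 0; 0; 1], [:: 2; 5; 0; 0; 1; 1; 4; 4; 1; 2; 0; 2; 3; 1; 0]);
(13, [:: 0; 0; 1; 0; 0; 0; 0; 1; 0; 0; 0; 1; 0; 0; 0], [:: 5; 1; 2; 4; 1; 1; 4; 0; 2; 5; 1; 0; 0; 0; 0]);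
(4, [:: 0; 0; 0; 0; 0; 1; 0; 0; 0; 0; 0; 0; 0; 0; 1], [:: 6; 6; 0; 1; 0; 0; 1; 1; 3; 3; 3; 0; 2; 0; 0]);
(7, [:: 0; 0; 0; 0; 0; 0; 0; 0; 0; 1; 0; 0; 1; 0; 1], [:: 3; 3; 0; 0; 1; 3; 1; 0; 1; 2; 3; 3; 4; 1; 1]);
(8, [:: 0; 0; 0; 0; 0; 0; 0; 0; 0; 1; 1; 1; 0; 0; 0], [:: 1; 4; 2; 0; 0; 1; 1; 4; 0; 3; 3; 1; 1; 3; 2]);
(8, [:: 0; 0; 0; 0; 1; 0; 0; 0; 0; 0; 0; 0; 0; 0; 1], [:: 2; 6; 1; 3; 1; 2; 0; 1; 0; 1; 0; 3; 1; 2; 3]);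
(4, [:: 0; 0; 0; 0; 0; 0; 1; 0; 0; 0; 0; 0; 0; 1; 0], [:: 1; 5; 4; 0; 0; 2; 0; 2; 3; 0; 2; 0; 1; 3; 3]);
(11, [:: 0; 0; 0; 0; 0; 0; 0; 0; 1; 0; 0; 0; 0; 0; 0], [:: 3; 5; 1; 2; 3; 6; 1; 1; 1; 0; 1; 0; 1; 0; 1]);
(8, [:: 0; 0; 0; 0; 1; 0; 0; 0; 0; 0; 0; 0; 1; 0; 0], [:: 2; 1; 5; 3; 1; 2; 5; 0; 0; 1; 0; 0; 4; 1; 1]);
(11, [:: 0; 0; 0; 1; 1; 0; 0; 0; 1; 0; 0; 0; 0; 0; 0], [:: 2; 2; 2; 4; 0; 3; 1; 4; 0; 4; 0; 0; 4; 0; 0]);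
(13, [:: 0; 0; 0; 0; 1; 0; 0; 1; 0; 0; 0; 0; 0; 0; 0], [:: 1; 1; 5; 2; 1; 2; 5; 2; 1; 0; 2; 1; 0; 0; 3]);
(8, [:: 0; 0; 0; 0; 0; 0; 0; 0; 0; 0; 0; 0; 0; 1; 0], [:: 6; 1; 1; 1; 2; 1; 5; 0; 0; 5; 2; 0; 1; 1; 0]);
(13, [:: 0; 0; 0; 1; 0; 0; 0; 0; 0; 0; 0; 1; 0; 0; 0], [:: 1; 3; 4; 0; 1; 0; 2; 1; 3; 4; 2; 3; 0; 0; 2]);
(4, [:: 0; 0; 0; 0; 0; 0; 1; 1; 1; 0; 0; 0; 0; 0; 0], [:: 0; 3; 1; 4; 0; 3; 1; 0; 2; 2; 3; 1; 0; 3; 3]);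
(4, [:: 0; 0; 0; 0; 0; 0; 0; 0; 0; 0; 0; 0; 0; 1; 1], [:: 4; 1; 4; 0; 0; 2; 1; 4; 0; 1; 1; 0; 4; 2; 2]);
(4, [:: 0; 0; 0; 0; 0; 0; 0; 0; 0; 0; 1; 1; 0; 0; 0], [:: 1; 2; 4; 0; 0; 0; 1; 1; 3; 2; 1; 3; 3; 3; 2]);
(11, [:: 0; 0; 0; 0; 1; 0; 0; 0; 1; 0; 0; 0; 0; 0; 0], [:: 6; 1; 1; 4; 1; 2; 5; 2; 0; 1; 0; 0; 0; 2; 1]);
(4, [:: 0; 0; 0; 0; 0; 0; 0; 0; 0; 0; 0; 0; 1; 0; 0], [:: 1; 6; 3; 0; 0; 2; 1; 2; 1; 3; 2; 3; 0; 1; 1]);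
(11, [:: 0; 0; 0; 0; 0; 0; 0; 0; 1; 0; 0; 0; 0; 0; 1], [:: 1; 4; 2; 4; 1; 2; 5; 2; 0; 1; 0; 0; 1; 0; 3]);
(4, [:: 0; 0; 0; 0; 0; 0; 0; 0; 0; 0; 0; 0; 1; 1; 1], [:: 7; 4; 2; 0; 0; 5; 1; 0; 0; 2; 2; 3; 0; 0; 0]);
(4, [:: 0; 0; 0; 0; 0; 0; 0; 1; 0; 0; 0; 0; 0; 0; 1], [:: 1; 2; 5; 0; 0; 2; 1; 1; 3; 4; 2; 1; 1; 0; 3]);
(11, [:: 0; 0; 0; 1; 0; 0; 0; 0; 0; 0; 0; 0; 0; 1; 0], [:: 2; 2; 4; 0; 2; 5; 1; 4; 1; 0; 1; 0; 2; 0; 2]);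
(4, [:: 0; 0; 0; 0; 0; 0; 0; 0; 1; 0; 0; 0; 1; 0; 0], [:: 1; 0; 4; 2; 0; 4; 4; 1; 0; 1; 0; 3; 1; 3; 2]);
(8, [:: 0; 0; 0; 0; 0; 0; 0; 0; 0; 0; 0; 0; 0; 2; 0], [:: 1; 2; 1; 0; 3; 0; 5; 3; 0; 4; 2; 0; 2; 0; 3]);
(4, [:: 0; 0; 0; 0; 0; 0; 0; 0; 0; 0; 0; 1; 1; 0; 0], [:: 2; 0; 1; 4; 0; 2; 3; 3; 0; 3; 4; 1; 0; 2; 1]);
(4, [:: 0; 0; 0; 0; 0; 0; 1; 0; 0; 0; 1; 0; 0; 1; 0], [:: 2; 4; 1; 0; 0; 6; 1; 1; 2; 2; 0; 3; 1; 3; 0])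
].

Lemma T5_lower_certs_ok : all (lower_cert_ok T5_nbrs) T5_lower_certs.
Proof. vm_cast_no_check (erefl true). Qed.

Lemma T5_lower_certs_cover :
  covers 15 9 (map suffix_mins (map (cert_box T5_nbrs) T5_lower_certs)).
Proof. vm_cast_no_check (erefl true). Qed.

Theorem theorem4p5 : is_gonality (rook_adj T5_pos) 10%:Z.
Proof.
have adj_sym := rook_adj_sym T5_pos; have adj_irr := rook_adj_irr T5_pos.
split.
  exists (seq_div T5_cells T5_divisor); split; last first.
    by rewrite (div_deg_seq_div uniq_T5_cells mem_T5_cells).
  exact: (reaches_positive_rank adj_sym adj_irr uniq_T5_cells mem_T5_cells T5_adj_lists
            (hs := T5_scripts) T5_scripts_reach).
move=> D rD; suff : (9%:Z < div_deg D)%R by lia.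
apply: (gonality_ge adj_sym adj_irr (cell 1 1)) rD => D1.
exact: (covers_no_positive_rank (cell 1 1) adj_sym adj_irr uniq_T5_cells mem_T5_cells
          T5_adj_lists T5_lower_certs_ok T5_lower_certs_cover).
Qed.
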